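(* Assume that the dual pair $(E,E')$ is $(\mathcal{K})$ over $\mathbf{A}$ (in the sense defined in the context). Then: (1) If the left $\mathbf{A}$-module ${}_{\mathbf{A}}E'$ is injective, then the right $\mathbf{A}$-module $E_{\mathbf{A}}$ is flat. (2) Conversely, if $E_{\mathbf{A}}$ is flat, then ${}_{\mathbf{A}}E'$ is $1$-injective.
   Context: Let $\mathbf{k}=\mathbb{R}$ or $\mathbb{C}$ and let $\mathbf{A}$ be a (not necessarily commutative) Noetherian domain which is a $\mathbf{k}$-algebra. Let $E,E'$ be $\mathbf{k}$-vector spaces with a nondegenerate bilinear form $\langle -,-\rangle:E\times E'\to\mathbf{k}$; $E$ and $E'$ carry the weak topologies $\sigma(E,E')$ and $\sigma(E',E)$ ($(E,E')$ is a dual pair). Assume $E'$ is a left $\mathbf{A}$-module which is semitopological, i.e. each map $E'\to E'$, $x'\mapsto a\,x'$ ($a\in\mathbf{A}$) is continuous. Then $E$ is a right $\mathbf{A}$-module via $\langle x\,a,x'\rangle=\langle x,a\,x'\rangle$ for $x\in E$, $x'\in E'$, $a\in\mathbf{A}$, and all maps $x\mapsto x\,a$ are continuous. The bracket extends to $E^{1\times k}\times (E')^{k}$ (row vectors times column vectors), making $(E^{1\times k},(E')^k)$ a dual pair. For a matrix $P\in\mathbf{A}^{q\times k}$, write $P\bullet:(E')^k\to(E')^q$, $x'\mapsto P\,x'$ (continuous), whose transpose is $\bullet P:E^{1\times q}\to E^{1\times k}$, $x\mapsto x\,P$; similarly $\bullet P:\mathbf{A}^{1\times q}\to\mathbf{A}^{1\times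 k}$. The dual pair $(E,E')$ is called $(\mathcal{K})$ (Köthe) over $\mathbf{A}$ if for all positive integers $k,r$ and every $P\in\mathbf{A}^{k\times r}$: $\bullet P:E^{1\times k}\to E^{1\times r}$ has closed image if and only if $P\bullet:(E')^r\to(E')^k$ has closed image. For $n\ge 0$, ${}_{\mathbf{A}}E'$ is called $n$-injective if for all integers $k_1,\dots,k_{3+n}$ and matrices $P_i\in\mathbf{A}^{k_i\times k_{i+1}}$ ($1\le i\le 2+n$) such that the sequence $\mathbf{A}^{1\times k_1}\xrightarrow{\bullet P_1}\mathbf{A}^{1\times k_2}\xrightarrow{\bullet P_2}\mathbf{A}^{1\times k_3}\to\cdots\xrightarrow{\bullet P_{2+n}}\mathbf{A}^{1\times k_{3+n}}$ is exact, the sequence $(E')^{k_3}\xrightarrow{P_2\bullet}(E')^{k_2}\xrightarrow{P_1\bullet}(E')^{k_1}$ is exact. ($0$-injective is equivalent to injective.) *)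

From Stdlib Require Import Reals List.
From mathcomp Require Import all_boot.
Set Implicit Arguments.
Unset Strict Implicit.

Inductive scalars := RR | CC.

Definition K (s : scalars) : Type :=
  match s with RR => R | CC => (R * R)%type end.

Definition k0 (s : scalars) : K s :=
  match s return K s with RR => R0 | CC => (R0, R0) end.
Definition k1 (s : scalars) : K s :=
  match s return K s with RR => R1 | CC => (R1, R0) end.
Definition kadd (s : scalars) : K s -> K s -> K s :=
  match s return K s -> K s -> K s with
  | RR => Rplus
  | CC => fun x y => (Rplus (fst x) (fst y), Rplus (snd x) (snd y)) end.
Definition kopp (s : scalars) : K s -> K s :=
  match s return K s -> K s with
  | RR => Ropp
  | CC => fun x => (Ropp (fst x), Ropp (snd x)) end.
Definition kmul (s : scalars) : K s -> K s -> K s :=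
  match s return K s -> K s -> K s with
  | RR => Rmult
  | CC => fun x y => (Rminus (Rmult (fst x) (fst y)) (Rmult (snd x) (snd y)),
                      Rplus (Rmult (fst x) (snd y)) (Rmult (snd x) (fst y))) end.
Definition ksub (s : scalars) (x y : K s) : K s := kadd x (kopp y).
Definition kabs (s : scalars) : K s -> R :=
  match s return K s -> R with
  | RR => Rabs
  | CC => fun x => sqrt (Rplus (Rmult (fst x) (fst x)) (Rmult (snd x) (snd x))) end.

Record VS (s : scalars) := {
  vcar :> Type;
  v0 : vcar;
  vadd : vcar -> vcar -> vcar;
  vopp : vcar -> vcar;
  vscal : K s -> vcar -> vcar;
  vaddA : forall x y z, vadd x (vadd y z) = vadd (vadd x y) z;
  vaddC : forall x y, vadd x y = vadd y x;
  vadd0 : forall x, vadd v0 x = x;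
  vaddN : forall x, vadd (vopp x) x = v0;
  vscalA : forall a b x, vscal a (vscal b x) = vscal (kmul a b) x;
  vscal1 : forall x, vscal (k1 s) x = x;
  vscalDl : forall a b x, vscal (kadd a b) x = vadd (vscal a x) (vscal b x);
  vscalDr : forall a x y, vscal a (vadd x y) = vadd (vscal a x) (vscal a y)
}.
Arguments v0 {s} _.
Arguments vadd {s} _ _ _.
Arguments vopp {s} _ _.
Arguments vscal {s} _ _ _.

Record Alg (s : scalars) := {
  acar :> Type;
  a0 : acar;
  a1 : acar;
  aadd : acar -> acar -> acar;
  aopp : acar -> acar;
  amul : acar -> acar -> acar;
  ascal : K s -> acar -> acar;
  aaddA : forall x y z, aadd x (aadd y z) = aadd (aadd x y) z;
  aaddC : forall x y, aadd x y = aadd y x;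
  aadd0 : forall x, aadd a0 x = x;
  aaddN : forall x, aadd (aopp x) x = a0;
  amulA : forall x y z, amul x (amul y z) = amul (amul x y) z;
  amul1l : forall x, amul a1 x = x;
  amul1r : forall x, amul x a1 = x;
  amulDl : forall x y z, amul (aadd x y) z = aadd (amul x z) (amul y z);
  amulDr : forall x y z, amul x (aadd y z) = aadd (amul x y) (amul x z);
  ascalA : forall a b x, ascal a (ascal b x) = ascal (kmul a b) x;
  ascal1 : forall x, ascal (k1 s) x = x;
  ascalDl : forall a b x, ascal (kadd a b) x = aadd (ascal a x) (ascal b x);
  ascalDr : forall a x y, ascal a (aadd x y) = aadd (ascal a x) (ascal a y);
  ascal_mull : forall a x y, amul (ascal a x) y = ascal a (amul x y);
  ascal_mulr : forall a x y, amul x (ascal a y) = ascal a (amul x y)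
}.
Arguments a0 {s} _.
Arguments a1 {s} _.
Arguments aadd {s} _ _ _.
Arguments aopp {s} _ _.
Arguments amul {s} _ _ _.
Arguments ascal {s} _ _ _.

Section AlgDefs.
Variables (s : scalars) (A : Alg s).

Definition is_domain : Prop :=
  a1 A <> a0 A /\
  forall x y : A, amul A x y = a0 A -> x = a0 A \/ y = a0 A.

Definition left_ideal (I : A -> Prop) : Prop :=
  I (a0 A) /\ (forall x y, I x -> I y -> I (aadd A x y)) /\
  (forall x, I x -> I (aopp A x)) /\ (forall x y, I y -> I (amul A x y)).

Definition right_ideal (I : A -> Prop) : Prop :=
  I (a0 A) /\ (forall x y, I x -> I y -> I (aadd A x y)) /\
  (forall x, I x -> I (aopp A x)) /\ (forall x y, I x -> I (amul A x y)).

Definition acc_chain (ideal : (A -> Prop) -> Prop) : Prop :=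
  forall I : nat -> A -> Prop,
    (forall n, ideal (I n)) ->
    (forall n x, I n x -> I n.+1 x) ->
    exists N, forall n x, (N <= n)%N -> I n x -> I N x.

Definition noetherian_domain : Prop :=
  is_domain /\ acc_chain left_ideal /\ acc_chain right_ideal.

Unset Implicit Arguments.
Record LMod := {
  mcar :> Type;
  m0 : mcar;
  madd : mcar -> mcar -> mcar;
  mopp : mcar -> mcar;
  mact : A -> mcar -> mcar;
  maddA : forall x y z, madd x (madd y z) = madd (madd x y) z;
  maddC : forall x y, madd x y = madd y x;
  madd0 : forall x, madd m0 x = x;
  maddN : forall x, madd (mopp x) x = m0;
  mactA : forall a b x, mact (amul A a b) x = mact a (mact b x);
  mact1 : forall x, mact (a1 A) x = x;
  mactDl : forall a b x, mact (aadd A a b) x = madd (mact a x) (mact b x);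
  mactDr : forall a x y, mact a (madd x y) = madd (mact a x) (mact a y)
}.

Record AbGroup := {
  gcar :> Type;
  g0 : gcar;
  gadd : gcar -> gcar -> gcar;
  gopp : gcar -> gcar;
  gaddA : forall x y z, gadd x (gadd y z) = gadd (gadd x y) z;
  gaddC : forall x y, gadd x y = gadd y x;
  gadd0 : forall x, gadd g0 x = x;
  gaddN : forall x, gadd (gopp x) x = g0
}.

Set Implicit Arguments.
Definition lmod_lin (M N : LMod) (f : M -> N) : Prop :=
  (forall x y, f (madd M x y) = madd N (f x) (f y)) /\
  (forall a x, f (mact M a x) = mact N a (f x)).

Definition lin_into (M : LMod) (T : Type) (tadd : T -> T -> T)
  (tact : A -> T -> T) (f : M -> T) : Prop :=
  (forall x y, f (madd M x y) = tadd (f x) (f y)) /\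
  (forall a x, f (mact M a x) = tact a (f x)).

Definition injective_lmod (T : Type) (tadd : T -> T -> T)
  (tact : A -> T -> T) : Prop :=
  forall (M N : LMod) (i : M -> N) (f : M -> T),
    lmod_lin i -> (forall x y, i x = i y -> x = y) ->
    lin_into tadd tact f ->
    exists g : N -> T, lin_into tadd tact g /\ forall x, g (i x) = f x.

(* An element of E (x)_A M is the class of a finite formal sum
   sum_k e_k (x) m_k, represented by the list of pairs; it is zero iff it is
   killed by every A-balanced biadditive map into an abelian group
   (universal property of the tensor product). *)
Definition balanced (Et : Type) (eadd : Et -> Et -> Et) (eact : Et -> A -> Et)
  (M : LMod) (G : AbGroup) (b : Et -> M -> G) : Prop :=
  (forall x y m, b (eadd x y) m = gadd G (b x m) (b y m)) /\
  (forall x m n, b x (madd M m n) = gadd G (b x m) (b x n)) /\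
  (forall x a m, b (eact x a) m = b x (mact M a m)).

Definition gsum (G : AbGroup) (l : list G) : G := foldr (gadd G) (g0 G) l.

Definition tensor_zero (Et : Type) (eadd : Et -> Et -> Et)
  (eact : Et -> A -> Et) (M : LMod) (t : list (Et * M)) : Prop :=
  forall (G : AbGroup) (b : Et -> M -> G), balanced eadd eact b ->
    gsum (map (fun p => b p.1 p.2) t) = g0 G.

Definition flat_rmod (Et : Type) (eadd : Et -> Et -> Et)
  (eact : Et -> A -> Et) : Prop :=
  forall (M N : LMod) (i : M -> N),
    lmod_lin i -> (forall x y, i x = i y -> x = y) ->
    forall t : list (Et * M),
      tensor_zero eadd eact (map (fun p => (p.1, i p.2)) t) ->
      tensor_zero eadd eact t.

Definition rowmulA (q k : nat) (x : 'I_q -> A) (P : 'I_q -> 'I_k -> A)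
  : 'I_k -> A :=
  fun j => \big[aadd A / a0 A]_(i < q) amul A (x i) (P i j).

Definition exactA (a b c : nat) (P : 'I_a -> 'I_b -> A) (Q : 'I_b -> 'I_c -> A)
  : Prop :=
  forall y : 'I_b -> A,
    (forall j, rowmulA y Q j = a0 A) <-> exists x, forall j, y j = rowmulA x P j.

End AlgDefs.

Section DualPair.
Variables (s : scalars) (A : Alg s) (E E' : VS s).

Definition bilinear (p : E -> E' -> K s) : Prop :=
  (forall x y z, p (vadd E x y) z = kadd (p x z) (p y z)) /\
  (forall c x z, p (vscal E c x) z = kmul c (p x z)) /\
  (forall x y z, p x (vadd E' y z) = kadd (p x y) (p x z)) /\
  (forall c x z, p x (vscal E' c z) = kmul c (p x z)).

Definition nondegenerate (p : E -> E' -> K s) : Prop :=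
  (forall x, (forall y, p x y = k0 s) -> x = v0 E) /\
  (forall y, (forall x, p x y = k0 s) -> y = v0 E').

Definition lmod_action (act : A -> E' -> E') : Prop :=
  (forall a b x, act (amul A a b) x = act a (act b x)) /\
  (forall x, act (a1 A) x = x) /\
  (forall a b x, act (aadd A a b) x = vadd E' (act a x) (act b x)) /\
  (forall a x y, act a (vadd E' x y) = vadd E' (act a x) (act a y)) /\
  (forall c a x, act (ascal A c a) x = vscal E' c (act a x)).
End DualPair.

Definition weak_open (s : scalars) (X Y : Type) (p : X -> Y -> K s)
  (U : X -> Prop) : Prop :=
  forall x, U x ->
    exists (ys : list Y) (eps : R), Rlt R0 eps /\
      forall z, (forall y, In y ys -> Rlt (kabs (ksub (p z y) (p x y))) eps) ->
        U z.

Definition weak_closed (s : scalars) (X Y : Type) (p : X -> Y -> K s)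
  (S : X -> Prop) : Prop :=
  weak_open p (fun x => ~ S x).

Definition weak_continuous (s : scalars) (X Y : Type) (p : X -> Y -> K s)
  (f : X -> X) : Prop :=
  forall U, weak_open p U -> weak_open p (fun x => U (f x)).

Section Rows.
Variables (s : scalars) (A : Alg s) (E E' : VS s) (p : E -> E' -> K s)
  (act : A -> E' -> E') (eact : E -> A -> E).

Definition pairn (n : nat) (x : 'I_n -> E) (y : 'I_n -> E') : K s :=
  \big[@kadd s / k0 s]_(i < n) p (x i) (y i).

Definition rowmulE (q k : nat) (x : 'I_q -> E) (P : 'I_q -> 'I_k -> A)
  : 'I_k -> E :=
  fun j => \big[vadd E / v0 E]_(i < q) eact (x i) (P i j).

Definition matmulE' (q k : nat) (P : 'I_q -> 'I_k -> A) (y : 'I_k -> E')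
  : 'I_q -> E' :=
  fun i => \big[vadd E' / v0 E']_(j < k) act (P i j) (y j).

Definition Kothe : Prop :=
  forall (k r : nat), (0 < k)%N -> (0 < r)%N ->
  forall P : 'I_k -> 'I_r -> A,
    weak_closed (@pairn r)
      (fun z : 'I_r -> E => exists x : 'I_k -> E, forall j, z j = rowmulE x P j)
    <->
    weak_closed (fun (y : 'I_k -> E') (x : 'I_k -> E) => pairn x y)
      (fun z : 'I_k -> E' => exists y : 'I_r -> E', forall i, z i = matmulE' P y i).

Definition exactE' (a b c : nat) (Q : 'I_b -> 'I_c -> A) (P : 'I_a -> 'I_b -> A)
  : Prop :=
  forall y : 'I_b -> E',
    (forall i, matmulE' P y i = v0 E') <-> exists z, forall j, y j = matmulE' Q z j.

(* n-injectivity of _A E' (0-based indices: k_0..k_{n+2}, P_0..P_{n+1}) *)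
Definition n_injective (n : nat) : Prop :=
  forall (ks : nat -> nat) (Ps : forall i, 'I_(ks i) -> 'I_(ks i.+1) -> A),
    (forall i, (i <= n)%N -> exactA (Ps i) (Ps i.+1)) ->
    exactE' (Ps 1%N) (Ps 0%N).
End Rows.

From Pilot Require Import Defs.
From Stdlib Require Import Reals Lra ClassicalEpsilon.
From HB Require Import structures.
From mathcomp Require Import all_boot all_algebra boolp.
(* MathComp also defines [bilinear] and [nondegenerate]; the statement refers
   to those of Defs. *)
Import Defs.
Set Implicit Arguments. Unset Strict Implicit. Unset Printing Implicit Defensive.

(* Both directions rest on one duality principle: a weakly closed image of a
   row map .S on E^{1 x m} (resp. of a column map S. on (E')^m) is the
   annihilator of the kernel of the transposed map -- the bipolar theorem for
   the weak topology ([row_image_dual], [col_image_dual]).  Kernels are always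
   weakly closed, and (K) transfers closedness between .S and S. ([kothe_mx]).

   (1) If E' is injective, Hom_A(-, E') turns the exact sequences
       A^m --.S--> A^n --.P--> A^e provided by Noetherianity ([kernel_fg]) into
       exact sequences on E' ([injective_exact]).  With the duality principle
       this gives the equational criterion: every relation x P = 0 in E
       factors as x = z S with S P = 0 ([injective_relations]).  Together with
       the description of vanishing tensors by relations
       ([tensor_zero_equational]) this proves flatness ([injective_flat]).
   (2) If E is flat, E (x) - keeps A^a --.Q--> A^b --.P--> A^c exact on rows of
       E ([flat_exact]); by duality the transposed sequence on E' is exact
       ([flat_exact_dual]), which is 1-injectivity ([flat_n_injective]). *)

Local Open Scope R_scope.

Definition kinv (s : scalars) : K s -> K s :=
  match s return K s -> K s with
  | RR => Rinv
  | CC => fun x => (fst x / (fst x * fst x + snd x * snd x),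
                    - snd x / (fst x * fst x + snd x * snd x)) end.

Section ScalarField.
Variable s : scalars.

Lemma kaddA (x y z : K s) : kadd x (kadd y z) = kadd (kadd x y) z.
Proof. case: s x y z => /= x y z; [ring | f_equal; ring]. Qed.
Lemma kaddC (x y : K s) : kadd x y = kadd y x.
Proof. case: s x y => /= x y; [ring | f_equal; ring]. Qed.
Lemma kadd0 (x : K s) : kadd (k0 s) x = x.
Proof. case: s x => /= [x|[a b]] /=; [ring | f_equal; ring]. Qed.
Lemma kaddN (x : K s) : kadd (kopp x) x = k0 s.
Proof. case: s x => /= x; [ring | f_equal; ring]. Qed.
Lemma kmulA (x y z : K s) : kmul x (kmul y z) = kmul (kmul x y) z.
Proof. case: s x y z => /= x y z; [ring | f_equal; unfold Rminus; ring]. Qed.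
Lemma kmulC (x y : K s) : kmul x y = kmul y x.
Proof. case: s x y => /= x y; [ring | f_equal; unfold Rminus; ring]. Qed.
Lemma kmul1 (x : K s) : kmul (k1 s) x = x.
Proof. case: s x => /= [x|[a b]] /=; [ring | f_equal; unfold Rminus; ring]. Qed.
Lemma kmulDl (x y z : K s) : kmul (kadd x y) z = kadd (kmul x z) (kmul y z).
Proof. case: s x y z => /= x y z; [ring | f_equal; unfold Rminus; ring]. Qed.
Lemma k1_neq0 : k1 s <> k0 s.
Proof. case: s => /=; [lra | case; lra]. Qed.

Lemma norm2_neq0 (a b : R) : (a, b) <> (0, 0) -> a * a + b * b <> 0.
Proof.
move=> ab0 h; apply: ab0.
have ha : a = 0 by nra.
have hb : b = 0 by nra.
by rewrite ha hb.
Qed.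

Lemma kmulVk (x : K s) : x <> k0 s -> kmul (kinv x) x = k1 s.
Proof.
case: s x => /= [x|[a b]] /= x0; first by field.
have := norm2_neq0 x0 => n0; f_equal; field; exact: n0.
Qed.
Lemma kinv0 : kinv (k0 s) = k0 s.
Proof. case: s => /=; [exact: Rinv_0 | f_equal; unfold Rdiv; ring]. Qed.

Lemma kabs_subrr (x : K s) : kabs (ksub x x) = 0.
Proof.
case: s x => /= [x|[a b]] /=; rewrite /ksub /=.
  by rewrite Rplus_opp_r Rabs_R0.
by rewrite !Rplus_opp_r Rmult_0_l Rplus_0_l sqrt_0.
Qed.
Lemma kabs_gt0 (x : K s) : x <> k0 s -> 0 < kabs x.
Proof.
case: s x => /= [x|[a b]] /= x0; first exact: Rabs_pos_lt.
by apply: sqrt_lt_R0; have := norm2_neq0 x0; nra.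
Qed.
Lemma kabs_sub0 (d : K s) : kabs (ksub (k0 s) d) = kabs d.
Proof.
case: s d => /= [x|[a b]] /=; rewrite /ksub /=.
  by rewrite Rplus_0_l Rabs_Ropp.
f_equal; ring.
Qed.
End ScalarField.

Local Close Scope R_scope.

Definition TK (s : scalars) := K s.
Section ScalarFieldInstance.
Variable s : scalars.
HB.instance Definition _ := gen_eqMixin (TK s).
HB.instance Definition _ := gen_choiceMixin (TK s).
HB.instance Definition _ :=
  GRing.isZmodule.Build (TK s) (@kaddA s) (@kaddC s) (@kadd0 s) (@kaddN s).
Lemma k1_neq0b : (k1 s : TK s) != 0%R.
Proof. by apply/eqP; exact: k1_neq0. Qed.
HB.instance Definition _ := GRing.Zmodule_isComNzRing.Build (TK s)
  (@kmulA s) (@kmulC s) (@kmul1 s) (@kmulDl s) k1_neq0b.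
Lemma kmulVk_b (x : TK s) : x != 0%R -> ((kinv x : TK s) * x = 1)%R.
Proof. by move/eqP; exact: kmulVk. Qed.
HB.instance Definition _ := GRing.ComNzRing_isField.Build (TK s) kmulVk_b (@kinv0 s).
End ScalarFieldInstance.

Import GRing.Theory.
Local Open Scope ring_scope.

Definition TA (s : scalars) (A : Alg s) := acar A.
Section AlgebraInstance.
Variables (s : scalars) (A : Alg s).
HB.instance Definition _ := gen_eqMixin (TA A).
HB.instance Definition _ := gen_choiceMixin (TA A).
HB.instance Definition _ :=
  GRing.isZmodule.Build (TA A) (@aaddA _ A) (@aaddC _ A) (@aadd0 _ A) (@aaddN _ A).
Lemma amul_assoc : associative (amul A : TA A -> TA A -> TA A).
Proof. exact: amulA. Qed.
HB.instance Definition _ := GRing.Zmodule_isPzRing.Build (TA A)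
  amul_assoc (@amul1l _ A) (@amul1r _ A) (@amulDl _ A) (@amulDr _ A).
End AlgebraInstance.

Definition TV (s : scalars) (E : VS s) := vcar E.
Section VectorSpaceInstance.
Variables (s : scalars) (E : VS s).
HB.instance Definition _ := gen_eqMixin (TV E).
HB.instance Definition _ := gen_choiceMixin (TV E).
HB.instance Definition _ :=
  GRing.isZmodule.Build (TV E) (@vaddA _ E) (@vaddC _ E) (@vadd0 _ E) (@vaddN _ E).
End VectorSpaceInstance.

Definition TN (s : scalars) (A : Alg s) (N : LMod s A) := @mcar s A N.
Section LModuleInstance.
Variables (s : scalars) (A : Alg s) (N : LMod s A).
HB.instance Definition _ := gen_eqMixin (TN N).
HB.instance Definition _ := gen_choiceMixin (TN N).
HB.instance Definition _ := GRing.isZmodule.Build (TN N)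
  (@maddA s A N) (@maddC s A N) (@madd0 s A N) (@maddN s A N).
Lemma mact_assoc (a b : TA A) (v : TN N) :
  mact s A N a (mact s A N b v) = mact s A N (a * b) v.
Proof. by rewrite mactA. Qed.
Lemma mact_addl (v : TN N) :
  {morph (mact s A N)^~ v : a b / (a : TA A) + b >-> (a : TN N) + b}.
Proof. by move=> a b; rewrite /= mactDl. Qed.
HB.instance Definition _ := GRing.Zmodule_isLmodule.Build (TA A) (TN N)
  mact_assoc (@mact1 s A N) (@mactDr s A N) mact_addl.
End LModuleInstance.

Definition TG (G : AbGroup) := gcar G.
Section AbGroupInstance.
Variable G : AbGroup.
HB.instance Definition _ := gen_eqMixin (TG G).
HB.instance Definition _ := gen_choiceMixin (TG G).
HB.instance Definition _ :=
  GRing.isZmodule.Build (TG G) (@gaddA G) (@gaddC G) (@gadd0 G) (@gaddN G).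
Lemma gsum_big (I : Type) (t : seq I) (f : I -> G) :
  gsum (map f t) = \sum_(a <- t) (f a : TG G).
Proof. by elim: t => [|a t IH] /=; rewrite ?big_nil ?big_cons ?IH. Qed.
End AbGroupInstance.

Definition cat2 (T : Type) m n (F : 'I_m -> T) (G : 'I_n -> T) : 'I_(m + n) -> T :=
  fun i => match split i with inl a => F a | inr b => G b end.
Lemma cat2l (T : Type) m n (F : 'I_m -> T) (G : 'I_n -> T) i : cat2 F G (lshift n i) = F i.
Proof. by rewrite /cat2 (unsplitK (inl _ i)). Qed.
Lemma cat2r (T : Type) m n (F : 'I_m -> T) (G : 'I_n -> T) i : cat2 F G (rshift m i) = G i.
Proof. by rewrite /cat2 (unsplitK (inr _ i)). Qed.

Lemma cat2_split (T : Type) m n (F : 'I_(m + n) -> T) :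
  F = cat2 (fun i => F (lshift n i)) (fun i => F (rshift m i)).
Proof. by apply: funext => i; case: (split_ordP i) => k ->; rewrite ?cat2l ?cat2r. Qed.
Lemma cat2_inj (T : Type) m n (F F' : 'I_m -> T) (G G' : 'I_n -> T) :
  cat2 F G = cat2 F' G' -> F = F' /\ G = G'.
Proof.
move=> e; split; apply: funext => i.
  by rewrite -(cat2l F G) -(cat2l F' G') e.
by rewrite -(cat2r F G) -(cat2r F' G') e.
Qed.

Lemma cat2_const (T : Type) m n (c : T) :
  cat2 (fun _ : 'I_m => c) (fun _ : 'I_n => c) = fun _ => c.
Proof. by apply: funext => i; case: (split_ordP i) => k ->; rewrite ?cat2l ?cat2r. Qed.

(* Matrices over a ring act on columns of vectors of a left module (P y) and,
   through a right action, on rows of vectors (x P); these are the maps P. and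
   .P of the paper. *)
Section LeftMatrixAction.
Variables (R : pzRingType) (V : lmodType R).

Definition matV (m n : nat) (P : 'M[R]_(m, n)) (y : 'I_n -> V) : 'I_m -> V :=
  fun i => \sum_j P i j *: y j.

Lemma matV_mul m n k (P : 'M[R]_(m, n)) (Q : 'M[R]_(n, k)) y :
  matV (P *m Q) y = matV P (matV Q y).
Proof.
apply: funext => i; rewrite /matV.
under eq_bigr do rewrite !mxE scaler_suml.
rewrite exchange_big /=; apply: eq_bigr => j _.
by rewrite scaler_sumr; apply: eq_bigr => l _; rewrite scalerA.
Qed.
Lemma matV_add m n (P : 'M[R]_(m, n)) y z :
  matV P (fun j => y j + z j) = fun i => matV P y i + matV P z i.
Proof.
by apply: funext => i; rewrite /matV -big_split; apply: eq_bigr => j _; rewrite scalerDr.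
Qed.
Lemma matV0 m n (y : 'I_n -> V) : matV (0 : 'M_(m, n)) y = fun _ => 0.
Proof. by apply: funext => i; rewrite /matV big1 // => j _; rewrite mxE scale0r. Qed.
Lemma matV0r m n (P : 'M[R]_(m, n)) : matV P (fun _ => 0) = fun _ => 0.
Proof. by apply: funext => i; rewrite /matV big1 // => j _; rewrite scaler0. Qed.
Lemma matVN m n (P : 'M[R]_(m, n)) y : matV P (fun j => - y j) = fun i => - matV P y i.
Proof.
by apply: funext => i; rewrite /matV -sumrN; apply: eq_bigr => j _; rewrite scalerN.
Qed.
Lemma matV_row_mx m n1 n2 (P1 : 'M[R]_(m, n1)) (P2 : 'M[R]_(m, n2)) y1 y2 :
  matV (row_mx P1 P2) (cat2 y1 y2) = fun i => matV P1 y1 i + matV P2 y2 i.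
Proof.
apply: funext => i; rewrite /matV big_split_ord /=.
by congr (_ + _); apply: eq_bigr => j _; rewrite ?row_mxEl ?row_mxEr ?cat2l ?cat2r.
Qed.
Lemma matV_col_mx m1 m2 n (P1 : 'M[R]_(m1, n)) (P2 : 'M[R]_(m2, n)) y :
  matV (col_mx P1 P2) y = cat2 (matV P1 y) (matV P2 y).
Proof.
apply: funext => i; case: (split_ordP i) => k ->; rewrite ?cat2l ?cat2r;
  by apply: eq_bigr => j _; rewrite ?col_mxEu ?col_mxEd.
Qed.
End LeftMatrixAction.

Section RightMatrixAction.
Variables (R : pzRingType) (V : zmodType) (ract : V -> R -> V).
Hypothesis ractDl : forall x y a, ract (x + y) a = ract x a + ract y a.
Hypothesis ractDr : forall x a b, ract x (a + b) = ract x a + ract x b.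
Hypothesis ractM : forall x a b, ract x (a * b) = ract (ract x a) b.

Lemma ract0r x : ract x 0 = 0.
Proof. by apply: (addIr (ract x 0)); rewrite -ractDr !add0r. Qed.
Lemma ract0l a : ract 0 a = 0.
Proof. by apply: (addIr (ract 0 a)); rewrite -ractDl !add0r. Qed.
Lemma ractNl x a : ract (- x) a = - ract x a.
Proof. by apply: (addIr (ract x a)); rewrite -ractDl !addNr ract0l. Qed.
Lemma ractNr x a : ract x (- a) = - ract x a.
Proof. by apply: (addIr (ract x a)); rewrite -ractDr !addNr ract0r. Qed.
Lemma ract_suml I r (P : pred I) F a :
  ract (\sum_(i <- r | P i) F i) a = \sum_(i <- r | P i) ract (F i) a.
Proof. by apply: (big_morph (ract^~ a)) => [x y|]; rewrite ?ractDl ?ract0l. Qed.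
Lemma ract_sumr I r (P : pred I) F x :
  ract x (\sum_(i <- r | P i) F i) = \sum_(i <- r | P i) ract x (F i).
Proof. by apply: (big_morph (ract x)) => [a b|]; rewrite ?ractDr ?ract0r. Qed.

Definition rowV (m n : nat) (x : 'I_m -> V) (P : 'M[R]_(m, n)) : 'I_n -> V :=
  fun j => \sum_i ract (x i) (P i j).

Lemma rowV_mul m n k (x : 'I_m -> V) (P : 'M[R]_(m, n)) (Q : 'M[R]_(n, k)) :
  rowV (rowV x P) Q = rowV x (P *m Q).
Proof.
apply: funext => l; rewrite /rowV.
under eq_bigr do rewrite ract_suml.
rewrite exchange_big /=; apply: eq_bigr => i _.
by rewrite mxE ract_sumr; apply: eq_bigr => j _; rewrite ractM.
Qed.
Lemma rowV_add m n (x y : 'I_m -> V) (P : 'M[R]_(m, n)) :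
  rowV (fun i => x i + y i) P = fun j => rowV x P j + rowV y P j.
Proof.
by apply: funext => j; rewrite /rowV -big_split; apply: eq_bigr => i _; rewrite ractDl.
Qed.
Lemma rowV0 m n (x : 'I_m -> V) : rowV x (0 : 'M_(m, n)) = fun _ => 0.
Proof. by apply: funext => j; rewrite /rowV big1 // => i _; rewrite mxE ract0r. Qed.
Lemma rowV0l m n (P : 'M[R]_(m, n)) : rowV (fun _ => 0) P = fun _ => 0.
Proof. by apply: funext => j; rewrite /rowV big1 // => i _; rewrite ract0l. Qed.
Lemma rowVN m n (x : 'I_m -> V) (P : 'M[R]_(m, n)) :
  rowV (fun i => - x i) P = fun j => - rowV x P j.
Proof.
by apply: funext => j; rewrite /rowV -sumrN; apply: eq_bigr => i _; rewrite ractNl.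
Qed.
Lemma rowV_row_mx m n1 n2 (x : 'I_m -> V) (P1 : 'M[R]_(m, n1)) (P2 : 'M[R]_(m, n2)) :
  rowV x (row_mx P1 P2) = cat2 (rowV x P1) (rowV x P2).
Proof.
apply: funext => j; case: (split_ordP j) => k ->; rewrite ?cat2l ?cat2r;
  by apply: eq_bigr => i _; rewrite ?row_mxEl ?row_mxEr.
Qed.
Lemma rowV_col_mx m1 m2 n (x1 : 'I_m1 -> V) (x2 : 'I_m2 -> V)
    (P1 : 'M[R]_(m1, n)) (P2 : 'M[R]_(m2, n)) :
  rowV (cat2 x1 x2) (col_mx P1 P2) = fun j => rowV x1 P1 j + rowV x2 P2 j.
Proof.
apply: funext => j; rewrite /rowV big_split_ord /=.
by congr (_ + _); apply: eq_bigr => i _; rewrite ?col_mxEu ?col_mxEd ?cat2l ?cat2r.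
Qed.
End RightMatrixAction.

(* Over a left Noetherian ring every left submodule of A^{1 x n} is finitely
   generated; in particular the left kernel {r | r P = 0} of a matrix P is the
   row space of a matrix S. *)
Section NoetherianRowModules.
Variables (s : scalars) (A : Alg s).
Local Notation TA := (TA A).

Inductive Span (l : seq TA) : TA -> Prop :=
| Span_gen g : g \in l -> Span l g
| Span0 : Span l 0
| SpanD x y : Span l x -> Span l y -> Span l (x + y)
| SpanM a x : Span l x -> Span l (a * x).

Lemma Span_ideal l : left_ideal (Span l).
Proof.
do ![split]; [exact: Span0 | exact: SpanD | | exact: SpanM].
by move=> x hx; rewrite -[aopp A x]/(- (x : TA)) -mulN1r; apply: SpanM.
Qed.

Lemma Span_subset l l' x : {subset l <= l'} -> Span l x -> Span l' x.
Proof. by move=> sub; elim=> [g /sub|||]; constructor. Qed.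

Lemma Span_sum (l : seq TA) x : Span l x ->
  exists c : 'I_(size l) -> TA, x = \sum_i c i * l`_i.
Proof.
elim=> [g gl| |x1 y1 _ [c1 ->] _ [c2 ->]| a x1 _ [c ->]].
- have gi : (index g l < size l)%N by rewrite index_mem.
  exists (fun i => (val i == index g l)%:R).
  rewrite (bigD1 (Ordinal gi)) //= eqxx mul1r nth_index // big1 ?addr0 // => i ne.
  by case: eqP => [e|]; rewrite ?mul0r //; case/eqP: ne; apply: val_inj.
- by exists (fun _ => 0); rewrite big1 // => i _; rewrite mul0r.
- by exists (fun i => c1 i + c2 i); rewrite -big_split; apply: eq_bigr => i _; rewrite mulrDl.
- by exists (fun i => a * c i); rewrite mulr_sumr; apply: eq_bigr => i _; rewrite mulrA.
Qed.

Hypothesis noeth : acc_chain (@left_ideal s A).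

(* If some left ideal were not finitely generated, choosing elements outside
   the successive spans would build a strictly increasing chain. *)
Lemma ideal_fg (I : TA -> Prop) : left_ideal I ->
  exists l : seq TA, (forall g, g \in l -> I g) /\ forall x, I x -> Span l x.
Proof.
move=> [I0 [ID [IN IM]]]; apply: NNPP => not_fg.
have escape : forall l : seq TA, (forall g, g \in l -> I g) ->
    exists x, I x /\ ~ Span l x.
  move=> l lI; apply: NNPP => h; apply: not_fg; exists l; split => // x Ix.
  by apply: NNPP => nx; apply: h; exists x.
pose next (l : seq TA) := epsilon (inhabits (0 : TA)) (fun x => I x /\ ~ Span l x).
pose gens := fix gens n := if n is n'.+1 then rcons (gens n') (next (gens n')) else [::].
have gensI : forall n g, g \in gens n -> I g.
  elim=> [|n IH] g //=; rewrite mem_rcons inE => /orP[/eqP ->|/IH //].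
  by case: (epsilon_spec (inhabits (0 : TA)) _ (escape _ IH)).
have chain : forall n x, Span (gens n) x -> Span (gens n.+1) x.
  by move=> n x; apply: Span_subset => g hg /=; rewrite mem_rcons inE hg orbT.
have [N stable] := noeth (fun n => Span_ideal (gens n)) chain.
have inN1 : Span (gens N.+1) (next (gens N)).
  by apply: Span_gen; rewrite /= mem_rcons mem_head.
have := stable N.+1 _ (leqnSn N) inN1.
by case: (epsilon_spec (inhabits (0 : TA)) _ (escape _ (gensI N))).
Qed.

Definition submodule n (U : 'rV[TA]_n -> Prop) : Prop :=
  [/\ U 0, (forall x y, U x -> U y -> U (x + y)) & (forall a x, U x -> U (a *: x))].

Definition generated_by n m (U : 'rV[TA]_n -> Prop) (G : 'M[TA]_(m, n)) : Prop :=
  (forall i, U (row i G)) /\ forall r, U r -> exists c : 'rV_m, r = c *m G.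

Lemma submodule_comb n m (U : 'rV[TA]_n -> Prop) (G : 'M[TA]_(m, n)) :
  submodule U -> (forall i, U (row i G)) -> forall c : 'rV_m, U (c *m G).
Proof.
move=> [U0 UD UZ] UG c; rewrite mulmx_sum_row.
by apply: (big_ind U) => // i _; apply: UZ.
Qed.

Lemma submoduleN n (U : 'rV[TA]_n -> Prop) x : submodule U -> U x -> U (- x).
Proof. by move=> [_ _ UZ] Ux; rewrite -scaleN1r; apply: UZ. Qed.

Lemma submodule_tail n (U : 'rV[TA]_(1 + n) -> Prop) :
  submodule U -> submodule (fun r' => U (row_mx 0 r')).
Proof.
move=> [U0 UD UZ]; split; first by rewrite row_mx0.
- by move=> x y hx hy; rewrite -[0 : 'M_1]addr0 -add_row_mx; apply: UD.
- by move=> a x hx; rewrite -[0 : 'M_1](scaler0 _ a) -scale_row_mx; apply: UZ.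
Qed.

Lemma submodule_head_ideal n (U : 'rV[TA]_(1 + n) -> Prop) : submodule U ->
  left_ideal (fun a : TA => exists r', U (row_mx a%:M r')).
Proof.
move=> UU; have [U0 UD UZ] := UU.
do ![split].
- by exists 0; rewrite (raddf0 (@scalar_mx TA 1)) row_mx0.
- move=> x y [r1 h1] [r2 h2]; exists (r1 + r2).
  by rewrite (raddfD (@scalar_mx TA 1)) -add_row_mx; apply: UD.
- move=> x [r1 h1]; exists (- r1).
  by rewrite (raddfN (@scalar_mx TA 1)) -opp_row_mx; apply: submoduleN.
- move=> x y [r1 h1]; exists ((x : TA) *: r1).
  by rewrite -scale_scalar_mx -scale_row_mx; apply: UZ.
Qed.

Lemma head_generators n (U : 'rV[TA]_(1 + n) -> Prop) : submodule U ->
  exists k (G : 'M[TA]_(k, 1 + n)), (forall i, U (row i G)) /\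
    forall r, U r -> exists c : 'rV_k, lsubmx (r - c *m G) = 0.
Proof.
move=> UU; have [l [lI lspan]] := ideal_fg (submodule_head_ideal UU).
pose lift (g : TA) := epsilon (inhabits (0 : 'rV[TA]_n)) (fun r' => U (row_mx g%:M r')).
have liftU : forall i : 'I_(size l), U (row_mx (l`_i)%:M (lift l`_i)).
  move=> i; apply: (epsilon_spec (inhabits (0 : 'rV[TA]_n)) (fun r' => U (row_mx _ r'))).
  by apply: lI; rewrite mem_nth.
pose G : 'M[TA]_(size l, 1 + n) := \matrix_i row_mx (l`_i)%:M (lift l`_i).
exists (size l), G; split=> [i|r Ur]; first by rewrite rowK.
have [c head_r] : exists c : 'I_(size l) -> TA, lsubmx r = (\sum_i c i * l`_i)%:M.
  have Ihead : exists r', U (row_mx (lsubmx r 0 0)%:M r').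
    by exists (rsubmx r); rewrite -mx11_scalar hsubmxK.
  have [c e] := Span_sum (lspan _ Ihead).
  by exists c; rewrite [LHS]mx11_scalar e.
exists (\row_i c i); rewrite linearB /= -[G]hsubmxK mul_mx_row row_mxKl head_r.
apply/eqP; rewrite subr_eq0; apply/eqP/matrixP => i j; rewrite !ord1 !mxE eqxx mulr1n.
apply: eq_bigr => k _; rewrite !mxE (unsplitK (inl _ _)) !mxE.
by rewrite eqxx mulr1n.
Qed.

Lemma submodule_fg n (U : 'rV[TA]_n -> Prop) : submodule U ->
  exists m (G : 'M[TA]_(m, n)), generated_by U G.
Proof.
elim: n U => [|n IH] U UU.
  exists 0%N, 0; split; first by case.
  by move=> r _; exists 0; rewrite [r]thinmx0 [_ *m _]thinmx0.
move: U UU; change n.+1 with (1 + n)%N => U UU.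
have [U0 UD UZ] := UU.
have [k [G1 [G1U G1head]]] := head_generators UU.
have [m [G2 [G2U G2gen]]] := IH _ (submodule_tail UU).
exists (k + m)%N, (col_mx G1 (row_mx 0 G2)); split.
  move=> i; case: (split_ordP i) => j ->; first by rewrite rowKu.
  by rewrite rowKd row_row_mx row0; apply: G2U.
move=> r Ur; have [c1 head0] := G1head r Ur.
have Urest : U (r - c1 *m G1).
  by apply: UD => //; apply: submoduleN => //; apply: submodule_comb.
have [c2 rest] := G2gen (rsubmx (r - c1 *m G1)) ltac:(by rewrite -head0 hsubmxK).
exists (row_mx c1 c2); rewrite mul_row_col mul_mx_row mulmx0 -rest -head0 hsubmxK.
by rewrite addrC subrK.
Qed.

(* generators of the left kernel of P; one extra zero row makes the number of
   generators positive, as the (K) property is stated for positive sizes *)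
Lemma kernel_fg n e (P : 'M[TA]_(n, e)) :
  exists m (S : 'M[TA]_(m.+1, n)), S *m P = 0 /\
    forall r : 'rV_n, r *m P = 0 -> exists c : 'rV_(m.+1), r = c *m S.
Proof.
have UU : submodule (fun r : 'rV[TA]_n => r *m P = 0).
  split; first exact: mul0mx.
  - by move=> x y hx hy; rewrite mulmxDl hx hy addr0.
  - by move=> a x hx; rewrite -scalemxAl hx scaler0.
have [m [G [GU Ggen]]] := submodule_fg UU.
exists m, (col_mx (0 : 'M_(1, n)) G); split.
  rewrite (mul_col_mx (0 : 'M_(1, n)) G P) mul0mx; apply/matrixP => i j; rewrite !mxE.
  case: split => k; rewrite ?mxE //.
  by have := GU k; rewrite -row_mul => /rowP /(_ j); rewrite !mxE.
move=> r rP; have [c ->] := Ggen r rP; exists (row_mx (0 : 'M_1) c : 'rV_(1 + m)).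
by rewrite (mul_row_col (0 : 'M_(1, 1))) mul0mx add0r.
Qed.
End NoetherianRowModules.

(* A weakly closed subspace V of X is cut out
   by the linear forms p(-, y): a point outside V is separated from V by finitely
   many coordinates, and in the finite-dimensional coordinate space a linear
   functional separates a vector from a subspace. *)
Section FiniteDimSeparation.
Variable F : fieldType.

(* a subspace of F^m is the row space of a matrix: take a subspace of maximal
   rank inside W; any w in W outside it would enlarge it *)
Lemma subspace_rowspace m (W : 'rV[F]_m -> Prop) : W 0 ->
  (forall a u v, W u -> W v -> W (a *: u + v)) ->
  exists B : 'M[F]_m, (forall u, (u <= B)%MS -> W u) /\ forall w, W w -> (w <= B)%MS.
Proof.
move=> W0 Wl.
pose inW (B : 'M[F]_m) := forall u : 'rV_m, (u <= B)%MS -> W u.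
pose rank_inW r := `[< exists B, inW B /\ \rank B = r >].
have rank0 : exists r, rank_inW r.
  exists 0%N; apply/asboolP; exists 0; split; last by rewrite mxrank0.
  by move=> u; rewrite submx0 => /eqP ->.
have rank_ub : forall r, rank_inW r -> (r <= m)%N.
  by move=> r /asboolP [B [_ <-]]; apply: rank_leq_col.
case: (ex_maxnP rank0 rank_ub) => r /asboolP [B [BW rB]] maxr.
exists B; split=> // w Ww; apply: contrapT => nwB.
have BwW : inW (B + w)%MS.
  move=> u /sub_addsmxP [[c1 c2] /= ->].
  have [a ->] : exists a, c2 *m w = a *: w by apply/sub_rVP; apply: submxMl.
  by rewrite addrC; apply: Wl => //; apply: BW; apply: submxMl.
have rank_lt : (\rank B < \rank (B + w)%MS)%N.
  have := mxrank_leqif_sup (addsmxSl B w); rewrite addsmx_sub submx_refl /=.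
  by move=> /leqifP; case: ifP => // /negbT; rewrite (negbTE (introN idP nwB)).
have := maxr (\rank (B + w)%MS) (introT (asboolP _) (ex_intro _ _ (conj BwW erefl))).
by rewrite -rB leqNgt rank_lt.
Qed.

Lemma separate m (W : 'rV[F]_m -> Prop) : W 0 ->
  (forall a u v, W u -> W v -> W (a *: u + v)) ->
  forall v, ~ W v -> exists c : 'cV[F]_m, (forall w, W w -> w *m c = 0) /\ v *m c != 0.
Proof.
move=> W0 Wl v nWv; have [B [BW WB]] := subspace_rowspace W0 Wl.
have : v *m cokermx B != 0 by rewrite -submxE; apply/negP => /BW.
move=> nz; have [j vj] : exists j, (v *m cokermx B) 0 j != 0.
  apply: contrapT => hall; case/negP: nz; apply/eqP/rowP => j; rewrite [RHS]mxE.
  by apply: contrapT => hj; apply: hall; exists j; apply/eqP.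
have colE : forall w : 'rV_m, w *m col j (cokermx B) = col j (w *m cokermx B).
  by move=> w; apply/matrixP => i k; rewrite !mxE; apply: eq_bigr => l _; rewrite !mxE.
exists (col j (cokermx B)); split=> [w /WB|].
  by rewrite submxE colE => /eqP ->; rewrite col0.
apply/negP => /eqP vc0; move/negP: vj; apply; apply/eqP.
by have := congr1 (fun M : 'M_1 => M 0 0) vc0; rewrite colE !mxE.
Qed.
End FiniteDimSeparation.

Lemma In_nth_seq (T : Type) (y0 y : T) (l : seq T) :
  List.In y l -> exists i, (i < size l)%N /\ nth y0 l i = y.
Proof.
elim: l => [//|a l IH] /= [->|/IH [i [hi e]]]; first by exists 0%N.
by exists i.+1.
Qed.

Section WeakDuality.
Variables (s : scalars) (X Y : Type) (p : X -> Y -> K s).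
Local Notation pp x y := (p x y : TK s).

Lemma annihilator_closed (Q : Y -> Prop) :
  weak_closed p (fun x => forall y, Q y -> pp x y = 0).
Proof.
move=> x /= xQ.
have [y [Qy nz]] : exists y, Q y /\ pp x y <> 0.
  apply: contrapT => h; apply: xQ => y Qy; apply: contrapT => ne; apply: h; by exists y.
exists [:: y], (kabs (p x y)); split; first exact: kabs_gt0.
move=> z near zQ; have := near y (or_introl erefl).
rewrite (zQ y Qy); change (0 : TK s) with (k0 s); rewrite kabs_sub0.
exact: Rlt_irrefl.
Qed.

Variables (x0 : X) (xadd : X -> X -> X) (xscal : TK s -> X -> X).
Variables (y0 : Y) (yadd : Y -> Y -> Y) (yscal : TK s -> Y -> Y).
Hypothesis pp0l : forall y, pp x0 y = 0.
Hypothesis ppDl : forall u v y, pp (xadd u v) y = pp u y + pp v y.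
Hypothesis ppZl : forall a u y, pp (xscal a u) y = a * pp u y.
Hypothesis pp0r : forall x, pp x y0 = 0.
Hypothesis ppDr : forall x y1 y2, pp x (yadd y1 y2) = pp x y1 + pp x y2.
Hypothesis ppZr : forall a x y, pp x (yscal a y) = a * pp x y.

Lemma bipolar (V : X -> Prop) : V x0 ->
  (forall a u v, V u -> V v -> V (xadd (xscal a u) v)) ->
  weak_closed p V -> forall x, ~ V x ->
  exists y, (forall v, V v -> pp v y = 0) /\ pp x y <> 0.
Proof.
move=> V0 Vl Vc x nVx.
have [ys [eps [eps0 near_in]]] := Vc x nVx.
pose m := size ys.
pose coords (z : X) : 'rV[TK s]_m := \row_i pp z (nth y0 ys i).
pose W (w : 'rV[TK s]_m) := exists v, V v /\ coords v = w.
have W0 : W 0 by exists x0; split => //; apply/rowP => i; rewrite !mxE pp0l.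
have Wl : forall a u v, W u -> W v -> W (a *: u + v).
  move=> a u v [u' [Vu' <-]] [v' [Vv' <-]]; exists (xadd (xscal a u') v').
  by split; [exact: Vl | apply/rowP => i; rewrite !mxE ppDl ppZl].
have nWx : ~ W (coords x).
  move=> [v [Vv e]]; apply: (near_in v) => // y yin.
  have [i [hi <-]] := In_nth_seq y0 yin.
  have := congr1 (fun r : 'rV_m => r 0 (Ordinal hi)) e; rewrite !mxE /= => ->.
  by rewrite kabs_subrr.
have [c [cW cx]] := separate W0 Wl nWx.
pose y := \big[yadd/y0]_(i < m) yscal (c i 0) (nth y0 ys i).
have py : forall z, pp z y = (coords z *m c) 0 0.
  move=> z; rewrite /y (big_morph (fun y => pp z y) (ppDr z) (pp0r z)) !mxE.
  by apply: eq_bigr => i _; rewrite ppZr !mxE mulrC.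
exists y; split=> [v Vv|]; first by rewrite py (cW (coords v)) ?mxE //; exists v.
rewrite py => h; case/negP: cx; apply/eqP/matrixP => i j.
by rewrite !ord1 h mxE.
Qed.
End WeakDuality.

(* The quotient T / V of an abelian group by a subgroup, as an AbGroup whose
   elements are the cosets.  It is the target of the balanced maps that detect
   vanishing of tensors. *)
Section QuotientGroup.
Variables (T : zmodType) (V : T -> Prop).
Hypothesis V0 : V 0.
Hypothesis VB : forall x y, V x -> V y -> V (x - y).

Lemma subgroupN x : V x -> V (- x).
Proof. by move=> Vx; rewrite -sub0r; apply: VB. Qed.
Lemma subgroupD x y : V x -> V y -> V (x + y).
Proof. by move=> Vx Vy; rewrite -[y]opprK; apply: VB => //; apply: subgroupN. Qed.

Definition coset_car := {C : T -> Prop | exists x, C = fun y => V (y - x)}.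
Definition coset (x : T) : coset_car :=
  exist _ (fun y => V (y - x)) (ex_intro _ x erefl).
Definition coset_repr (g : coset_car) : T := proj1_sig (cid (proj2_sig g)).

Lemma coset_reprK g : coset (coset_repr g) = g.
Proof.
rewrite /coset_repr; case: cid => x /= e.
move: g e => [C h] /= e; rewrite /coset; move: h; rewrite e => h.
by congr exist.
Qed.

Lemma cosetP x y : coset x = coset y <-> V (x - y).
Proof.
split=> [e|Vxy].
  by have := congr1 (fun g : coset_car => proj1_sig g x) e => /=; rewrite subrr => <-.
have E : (fun z => V (z - x)) = (fun z => V (z - y)).
  apply: funext => z; apply: propext; split => Vz.
    by have := subgroupD Vz Vxy; rewrite addrA subrK.
  by have := VB Vz Vxy; rewrite opprB addrA subrK.
rewrite /coset; move: (ex_intro _ x _) (ex_intro _ y _); rewrite E => h1 h2.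
by congr exist.
Qed.

Lemma coset_surj g : exists x, g = coset x.
Proof. by exists (coset_repr g); rewrite coset_reprK. Qed.

Definition coset_add g h := coset (coset_repr g + coset_repr h).
Definition coset_opp g := coset (- coset_repr g).

Lemma coset_reprP x : V (coset_repr (coset x) - x).
Proof. by apply/cosetP; rewrite coset_reprK. Qed.
Lemma cosetD x y : coset (x + y) = coset_add (coset x) (coset y).
Proof.
apply/cosetP; have := subgroupN (subgroupD (coset_reprP x) (coset_reprP y)).
by rewrite opprD !opprB addrACA -opprD.
Qed.
Lemma cosetN x : coset (- x) = coset_opp (coset x).
Proof. by apply/cosetP; rewrite opprK addrC; exact: coset_reprP. Qed.

Lemma coset_addA : forall x y z, coset_add x (coset_add y z) = coset_add (coset_add x y) z.
Proof.
move=> g h k; case: (coset_surj g) (coset_surj h) (coset_surj k) => a -> [b ->] [c ->].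
by rewrite -!cosetD addrA.
Qed.
Lemma coset_addC : forall x y, coset_add x y = coset_add y x.
Proof.
by move=> g h; case: (coset_surj g) (coset_surj h) => a -> [b ->]; rewrite -!cosetD addrC.
Qed.
Lemma coset_add0 : forall x, coset_add (coset 0) x = x.
Proof. by move=> g; case: (coset_surj g) => a ->; rewrite -cosetD add0r. Qed.
Lemma coset_addN : forall x, coset_add (coset_opp x) x = coset 0.
Proof. by move=> g; case: (coset_surj g) => a ->; rewrite -cosetN -cosetD addNr. Qed.

Definition QuotGroup : AbGroup := @Build_AbGroup coset_car (coset 0) coset_add coset_opp
  coset_addA coset_addC coset_add0 coset_addN.

Lemma coset_sum I (t : seq I) (f : I -> T) :
  gsum (map (fun i => (coset (f i) : gcar QuotGroup)) t) = coset (\sum_(i <- t) f i).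
Proof. by elim: t => [|a t IH] /=; rewrite ?big_nil // IH big_cons -cosetD. Qed.

Lemma coset_eq0 x : (coset x : gcar QuotGroup) = g0 QuotGroup -> V x.
Proof. by move/cosetP; rewrite subr0. Qed.
End QuotientGroup.

Lemma sig_eq (T : Type) (P : T -> Prop) (u v : {x | P x}) : sval u = sval v -> u = v.
Proof. by case: u v => [x hx] [y hy] /= e; move: hx hy; rewrite e => hx hy; congr exist. Qed.

Section RowModules.
Variables (s : scalars) (A : Alg s).
Local Notation TA := (TA A).
Variable e : nat.

Lemma row_scaleA (a b : TA) (x : 'rV[TA]_e) : (a * b) *: x = a *: (b *: x).
Proof. by rewrite scalerA. Qed.
Lemma row_scaleDl (a b : TA) (x : 'rV[TA]_e) : (a + b) *: x = a *: x + b *: x.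
Proof. by rewrite scalerDl. Qed.
Lemma row_scaleDr (a : TA) (x y : 'rV[TA]_e) : a *: (x + y) = a *: x + a *: y.
Proof. by rewrite scalerDr. Qed.
Definition RowLMod : LMod s A :=
  @Build_LMod s A 'rV[TA]_e 0 +%R -%R (fun a v => (a : TA) *: v)
    (@addrA _) (@addrC _) (@add0r _) (@addNr _)
    row_scaleA (@scale1r _ _) row_scaleDl row_scaleDr.

Variables (n : nat) (P : 'M[TA]_(n, e)).
Definition Img := {v : 'rV[TA]_e | exists r : 'rV_n, v = r *m P}.

Definition img0 : Img := exist _ 0 (ex_intro _ 0 (esym (mul0mx _ _))).
Lemma imgD_proof (u v : Img) : exists r : 'rV_n, sval u + sval v = r *m P.
Proof. by case: u v => [u [r hr]] [v [r' hr']] /=; exists (r + r'); rewrite hr hr' mulmxDl. Qed.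
Definition imgD (u v : Img) : Img := exist _ _ (imgD_proof u v).
Lemma imgN_proof (u : Img) : exists r : 'rV_n, - sval u = r *m P.
Proof. by case: u => [u [r hr]] /=; exists (- r); rewrite hr mulNmx. Qed.
Definition imgN (u : Img) : Img := exist _ _ (imgN_proof u).
Lemma imgZ_proof (a : TA) (u : Img) : exists r : 'rV_n, a *: sval u = r *m P.
Proof. by case: u => [u [r hr]] /=; exists (a *: r); rewrite hr scalemxAl. Qed.
Definition imgZ (a : TA) (u : Img) : Img := exist _ _ (imgZ_proof a u).

Lemma img_addA (x y z : Img) : imgD x (imgD y z) = imgD (imgD x y) z.
Proof. by apply: sig_eq; rewrite /= addrA. Qed.
Lemma img_addC (x y : Img) : imgD x y = imgD y x.
Proof. by apply: sig_eq; rewrite /= addrC. Qed.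
Lemma img_add0 (x : Img) : imgD img0 x = x.
Proof. by apply: sig_eq; rewrite /= add0r. Qed.
Lemma img_addN (x : Img) : imgD (imgN x) x = img0.
Proof. by apply: sig_eq; rewrite /= addNr. Qed.
Lemma img_scaleA (a b : TA) (x : Img) : imgZ (a * b) x = imgZ a (imgZ b x).
Proof. by apply: sig_eq; rewrite /= scalerA. Qed.
Lemma img_scale1 (x : Img) : imgZ 1 x = x.
Proof. by apply: sig_eq; rewrite /= scale1r. Qed.
Lemma img_scaleDl (a b : TA) (x : Img) : imgZ (a + b) x = imgD (imgZ a x) (imgZ b x).
Proof. by apply: sig_eq; rewrite /= scalerDl. Qed.
Lemma img_scaleDr (a : TA) (x y : Img) : imgZ a (imgD x y) = imgD (imgZ a x) (imgZ a y).
Proof. by apply: sig_eq; rewrite /= scalerDr. Qed.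
Definition ImgLMod : LMod s A :=
  @Build_LMod s A Img img0 imgD imgN imgZ img_addA img_addC img_add0 img_addN
    img_scaleA img_scale1 img_scaleDl img_scaleDr.

Definition img_incl (u : ImgLMod) : RowLMod := sval u.
Lemma img_incl_lin : lmod_lin img_incl.
Proof. by split. Qed.
Lemma img_incl_inj : forall x y : ImgLMod, img_incl x = img_incl y -> x = y.
Proof. by move=> x y; apply: sig_eq. Qed.

Definition img_row (k : 'I_n) : ImgLMod :=
  exist _ (row k P) (ex_intro _ (delta_mx 0 k) (rowE k P)).
End RowModules.

Section DualPair.
Variables (s : scalars) (A : Alg s) (E E' : VS s) (p : E -> E' -> K s).
Hypothesis Hbil : bilinear p.
Hypothesis Hnd : nondegenerate p.
Variable act : A -> E' -> E'.
Hypothesis Hact : lmod_action act.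
Variable eact : E -> A -> E.
Hypothesis Hadj : forall (x : E) (a : A) (y : E'), p (eact x a) y = p x (act a y).

Local Notation TA := (TA A).
Local Notation TE := (TV E).
Definition TE' := TV E'.
HB.instance Definition _ := GRing.Zmodule.on TE'.
Local Notation ea x a := (eact (x : TE) (a : TA) : TE).
Local Notation pp x y := (p (x : TE) (y : TE') : TK s).

Lemma act_addl (y : TE') : {morph act^~ y : a b / (a : TA) + b >-> (a : TE') + b}.
Proof. by move=> a b; case: Hact => _ [_ [h _]]; apply: h. Qed.
Lemma act_mul (a b : TA) (y : TE') : act a (act b y) = act (a * b) y.
Proof. by case: Hact => h _; rewrite h. Qed.
Lemma act_one (y : TE') : act (1 : TA) y = y.
Proof. by case: Hact => _ [h _]; apply: h. Qed.
Lemma act_addr (a : TA) : {morph act a : x y / (x : TE') + y}.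
Proof. by move=> x y; case: Hact => _ [_ [_ [h _]]]; apply: h. Qed.
HB.instance Definition _ :=
  GRing.Zmodule_isLmodule.Build TA TE' act_mul act_one act_addr act_addl.

Lemma act_ascal (c : TK s) (a : TA) (y : TE') : act (ascal A c a) y = vscal E' c (act a y).
Proof. by case: Hact => _ [_ [_ [_ h]]]; apply: h. Qed.
Lemma act_kscal (c : TK s) (a : TA) (y : TE') : act a (vscal E' c y) = vscal E' c (act a y).
Proof.
have -> : vscal E' c y = act (ascal A c (1 : TA)) y by rewrite act_ascal act_one.
rewrite act_mul -act_ascal; congr act.
by have := @ascal_mulr _ A c a (1 : TA); rewrite (@amul1r _ A).
Qed.

Lemma ppDl (x y : TE) (z : TE') : pp (x + y) z = pp x z + pp y z.
Proof. by case: Hbil => h _; apply: h. Qed.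
Lemma ppZl (c : TK s) (x : TE) (z : TE') : pp (vscal E c x) z = c * pp x z.
Proof. by case: Hbil => _ [h _]; apply: h. Qed.
Lemma ppDr (x : TE) (y z : TE') : pp x (y + z) = pp x y + pp x z.
Proof. by case: Hbil => _ [_ [h _]]; apply: h. Qed.
Lemma ppZr (c : TK s) (x : TE) (z : TE') : pp x (vscal E' c z) = c * pp x z.
Proof. by case: Hbil => _ [_ [_ h]]; apply: h. Qed.
Lemma pp0l (z : TE') : pp 0 z = 0.
Proof. by apply: (addIr (pp 0 z)); rewrite -ppDl !add0r. Qed.
Lemma pp0r (x : TE) : pp x 0 = 0.
Proof. by apply: (addIr (pp x 0)); rewrite -ppDr !add0r. Qed.
Lemma ppNl (x : TE) (z : TE') : pp (- x) z = - pp x z.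
Proof. by apply: (addIr (pp x z)); rewrite -ppDl !addNr pp0l. Qed.
Lemma ppNr (x : TE) (z : TE') : pp x (- z) = - pp x z.
Proof. by apply: (addIr (pp x z)); rewrite -ppDr !addNr pp0r. Qed.
Lemma pp_suml I r (P : pred I) (F : I -> TE) z :
  pp (\sum_(i <- r | P i) F i) z = \sum_(i <- r | P i) pp (F i) z.
Proof. by apply: (big_morph (fun x => pp x z)) => [x y|]; rewrite ?ppDl ?pp0l. Qed.
Lemma pp_sumr I r (P : pred I) (F : I -> TE') x :
  pp x (\sum_(i <- r | P i) F i) = \sum_(i <- r | P i) pp x (F i).
Proof. by apply: (big_morph (fun z => pp x z)) => [y z|]; rewrite ?ppDr ?pp0r. Qed.

Lemma pp_injl (x x' : TE) : (forall y, pp x y = pp x' y) -> x = x'.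
Proof.
move=> h; apply/eqP; rewrite -subr_eq0; apply/eqP; case: Hnd => nd _; apply: nd => y.
by have := h y; rewrite -/(pp _ _) ppDl ppNl => ->; rewrite subrr.
Qed.
Lemma pp_injr (y y' : TE') : (forall x, pp x y = pp x y') -> y = y'.
Proof.
move=> h; apply/eqP; rewrite -subr_eq0; apply/eqP; case: Hnd => _ nd; apply: nd => x.
by have := h x; rewrite -/(pp _ _) ppDr ppNr => ->; rewrite subrr.
Qed.

(* E is a right A-module: the action is the transpose of the action on E',
   hence inherits its laws through nondegeneracy *)
Lemma eactDl (x y : TE) (a : TA) : ea (x + y) a = ea x a + ea y a.
Proof. by apply: pp_injl => z; rewrite ppDl !Hadj ppDl. Qed.
Lemma eactDr (x : TE) (a b : TA) : ea x (a + b) = ea x a + ea x b.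
Proof. by apply: pp_injl => z; rewrite ppDl !Hadj -ppDr -act_addl. Qed.
Lemma eactM (x : TE) (a b : TA) : ea x (a * b) = ea (ea x a) b.
Proof. by apply: pp_injl => z; rewrite !Hadj -act_mul. Qed.
Lemma eact1 (x : TE) : ea x 1 = x.
Proof. by apply: pp_injl => z; rewrite Hadj act_one. Qed.
Lemma eact_kscal (c : TK s) (x : TE) (a : TA) : ea (vscal E c x) a = vscal E c (ea x a).
Proof. by apply: pp_injl => z; rewrite Hadj !ppZl Hadj. Qed.
Lemma eact0r (x : TE) : ea x 0 = 0.
Proof. exact: (ract0r eactDr). Qed.
Lemma eactNr (x : TE) (a : TA) : ea x (- a) = - ea x a.
Proof. exact: (ractNr eactDr). Qed.

Definition rowX m n (x : 'I_m -> TE) (P : 'M[TA]_(m, n)) : 'I_n -> TE :=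
  rowV (fun x a => ea x a) x P.
Definition colY m n (P : 'M[TA]_(m, n)) (y : 'I_n -> TE') : 'I_m -> TE' := matV P y.
Definition mxA m n (P : 'I_m -> 'I_n -> A) : 'M[TA]_(m, n) := \matrix_(i, j) (P i j : TA).

Lemma rowmulE_mx m n (x : 'I_m -> E) (P : 'I_m -> 'I_n -> A) :
  rowmulE eact x P = rowX x (mxA P).
Proof. by apply: funext => j; apply: eq_bigr => i _; rewrite mxE. Qed.
Lemma matmulE'_mx m n (P : 'I_m -> 'I_n -> A) (y : 'I_n -> E') :
  matmulE' act P y = colY (mxA P) y.
Proof. by apply: funext => j; apply: eq_bigr => i _; rewrite mxE. Qed.
Lemma mxA_id m n (P : 'M[TA]_(m, n)) : mxA (fun i j => P i j) = P.
Proof. by apply/matrixP => i j; rewrite mxE. Qed.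

Lemma rowX_mul m n k (x : 'I_m -> TE) (P : 'M[TA]_(m, n)) (Q : 'M[TA]_(n, k)) :
  rowX (rowX x P) Q = rowX x (P *m Q).
Proof. exact: (rowV_mul eactDl eactDr eactM). Qed.
Lemma rowXD m n (x y : 'I_m -> TE) (P : 'M[TA]_(m, n)) :
  rowX (fun i => x i + y i) P = fun j => rowX x P j + rowX y P j.
Proof. exact: (rowV_add eactDl). Qed.
Lemma rowX0l m n (P : 'M[TA]_(m, n)) : rowX (fun _ => 0) P = fun _ => 0.
Proof. exact: (rowV0l eactDl). Qed.
Lemma rowX0r m n (x : 'I_m -> TE) : rowX x (0 : 'M_(m, n)) = fun _ => 0.
Proof. exact: (rowV0 eactDr). Qed.
Lemma rowXN m n (x : 'I_m -> TE) (P : 'M[TA]_(m, n)) :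
  rowX (fun i => - x i) P = fun j => - rowX x P j.
Proof. exact: (rowVN eactDl). Qed.
Lemma rowX_kscal m n (c : TK s) (x : 'I_m -> TE) (P : 'M[TA]_(m, n)) :
  rowX (fun i => vscal E c (x i)) P = fun j => vscal E c (rowX x P j).
Proof.
apply: funext => j; rewrite /rowX /rowV; under eq_bigr do rewrite eact_kscal.
apply/esym; apply: (big_morph (vscal E c)) => [u v|]; first exact: vscalDr.
by apply: pp_injl => z; rewrite ppZl pp0l mulr0.
Qed.
Lemma colYD m n (P : 'M[TA]_(m, n)) (y z : 'I_n -> TE') :
  colY P (fun j => y j + z j) = fun i => colY P y i + colY P z i.
Proof. exact: matV_add. Qed.
Lemma colY_kscal m n (c : TK s) (P : 'M[TA]_(m, n)) (y : 'I_n -> TE') :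
  colY P (fun j => vscal E' c (y j)) = fun i => vscal E' c (colY P y i).
Proof.
apply: funext => i; rewrite /colY /matV; under eq_bigr do rewrite [_ *: _]act_kscal.
apply/esym; apply: (big_morph (vscal E' c)) => [u v|]; first exact: vscalDr.
by apply: pp_injr => x; rewrite ppZr pp0r mulr0.
Qed.

Lemma pairnE n (x : 'I_n -> E) (y : 'I_n -> E') :
  (pairn p x y : TK s) = \sum_i pp (x i) (y i).
Proof. by []. Qed.

Lemma pairn_transpose m n (x : 'I_m -> TE) (P : 'M[TA]_(m, n)) (y : 'I_n -> TE') :
  (pairn p (rowX x P) y : TK s) = pairn p x (colY P y).
Proof.
rewrite !pairnE /rowX /rowV /colY /matV; under eq_bigr do rewrite pp_suml.
rewrite exchange_big /=; apply: eq_bigr => i _.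
by rewrite pp_sumr; apply: eq_bigr => j _; rewrite Hadj.
Qed.

Lemma pairn0l n (y : 'I_n -> E') : (pairn p (fun _ => 0 : TE) y : TK s) = 0.
Proof. by rewrite pairnE big1 // => i _; rewrite pp0l. Qed.
Lemma pairn0r n (x : 'I_n -> E) : (pairn p x (fun _ => 0 : TE') : TK s) = 0.
Proof. by rewrite pairnE big1 // => i _; rewrite pp0r. Qed.
Lemma pairnDl n (x u : 'I_n -> E) (y : 'I_n -> E') :
  (pairn p (fun i => vadd E (x i) (u i)) y : TK s) = (pairn p x y : TK s) + pairn p u y.
Proof. by rewrite !pairnE -big_split; apply: eq_bigr => i _; rewrite ppDl. Qed.
Lemma pairnZl n c (x : 'I_n -> E) (y : 'I_n -> E') :
  (pairn p (fun i => vscal E c (x i)) y : TK s) = (c : TK s) * pairn p x y.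
Proof. by rewrite !pairnE mulr_sumr; apply: eq_bigr => i _; rewrite ppZl. Qed.
Lemma pairnDr n (x : 'I_n -> E) (y u : 'I_n -> E') :
  (pairn p x (fun i => vadd E' (y i) (u i)) : TK s) = (pairn p x y : TK s) + pairn p x u.
Proof. by rewrite !pairnE -big_split; apply: eq_bigr => i _; rewrite ppDr. Qed.
Lemma pairnZr n c (x : 'I_n -> E) (y : 'I_n -> E') :
  (pairn p x (fun i => vscal E' c (y i)) : TK s) = (c : TK s) * pairn p x y.
Proof. by rewrite !pairnE mulr_sumr; apply: eq_bigr => i _; rewrite ppZr. Qed.

Lemma pairn_eq0l n (x : 'I_n -> TE) : (forall y, (pairn p x y : TK s) = 0) -> x = fun _ => 0.
Proof.
move=> h; apply: funext => i; apply: pp_injl => y; rewrite pp0l.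
have := h (fun j => if j == i then y else 0); rewrite pairnE (bigD1 i) //= eqxx.
by rewrite big1 ?addr0 // => j /negbTE ->; rewrite pp0r.
Qed.
Lemma pairn_eq0r n (y : 'I_n -> TE') : (forall x, (pairn p x y : TK s) = 0) -> y = fun _ => 0.
Proof.
move=> h; apply: funext => i; apply: pp_injr => x; rewrite pp0r.
have := h (fun j => if j == i then x else 0); rewrite pairnE (bigD1 i) //= eqxx.
by rewrite big1 ?addr0 // => j /negbTE ->; rewrite pp0l.
Qed.

(* Kernels of .P and of P. are annihilators, hence weakly closed. *)
Lemma ker_rowX_closed n r (P : 'M[TA]_(n, r)) :
  weak_closed (@pairn s E E' p n) (fun x : 'I_n -> E => rowX x P = fun _ => 0).
Proof.
have -> : (fun x : 'I_n -> E => rowX x P = fun _ => 0) =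
    (fun x => forall y, (exists w, y = colY P w) -> (pairn p x y : TK s) = 0).
  apply: funext => x; apply: propext; split=> [xP0 y [w ->]|h].
    by rewrite -pairn_transpose xP0 pairn0l.
  by apply: pairn_eq0l => w; rewrite pairn_transpose; apply: h; exists w.
exact: annihilator_closed.
Qed.
Lemma ker_colY_closed m n (S : 'M[TA]_(m, n)) :
  weak_closed (fun (y : 'I_n -> E') (x : 'I_n -> E) => pairn p x y)
    (fun y : 'I_n -> E' => colY S y = fun _ => 0).
Proof.
have -> : (fun y : 'I_n -> E' => colY S y = fun _ => 0) =
    (fun y => forall x, (exists w, x = rowX w S) -> (pairn p x y : TK s) = 0).
  apply: funext => y; apply: propext; split=> [Sy0 x [w ->]|h].
    by rewrite pairn_transpose Sy0 pairn0r.
  by apply: pairn_eq0r => w; rewrite -pairn_transpose; apply: h; exists w.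
exact: (@annihilator_closed s _ _ (fun (y : 'I_n -> E') (x : 'I_n -> E) => pairn p x y)
  (fun x => exists w, x = rowX w S)).
Qed.

Definition row_image m n (S : 'M[TA]_(m, n)) (x : 'I_n -> E) : Prop :=
  exists w, x = rowX w S.
Definition col_image m n (S : 'M[TA]_(m, n)) (y : 'I_m -> E') : Prop :=
  exists w, y = colY S w.

Lemma row_image_dual m n (S : 'M[TA]_(m, n)) (x : 'I_n -> TE) :
  weak_closed (@pairn s E E' p n) (row_image S) ->
  (forall y, colY S y = (fun _ => 0) -> (pairn p x y : TK s) = 0) -> row_image S x.
Proof.
move=> closed ann; apply: contrapT => nx.
have Vl : forall a (u v : 'I_n -> E), row_image S u -> row_image S v ->
    row_image S (fun j => vadd E (vscal E a (u j)) (v j)).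
  move=> a u v [wu ->] [wv ->]; exists (fun i => vadd E (vscal E a (wu i)) (wv i)).
  by rewrite rowXD rowX_kscal.
have [y [yS xy]] := bipolar
  (fun y => pairn0l y) (fun x u y => pairnDl x u y) (fun c x y => pairnZl c x y)
  (fun x => pairn0r x) (fun x y u => pairnDr x y u) (fun c x y => pairnZr c x y)
  (ex_intro _ (fun _ => 0) (esym (rowX0l S))) Vl closed nx.
apply: xy; apply: ann; apply: pairn_eq0r => w.
by rewrite -pairn_transpose; apply: yS; exists w.
Qed.

Lemma col_image_dual m n (S : 'M[TA]_(m, n)) (y : 'I_m -> TE') :
  weak_closed (fun (y : 'I_m -> E') (x : 'I_m -> E) => pairn p x y) (col_image S) ->
  (forall x, rowX x S = (fun _ => 0) -> (pairn p x y : TK s) = 0) -> col_image S y.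
Proof.
move=> closed ann; apply: contrapT => ny.
have Vl : forall a (u v : 'I_m -> E'), col_image S u -> col_image S v ->
    col_image S (fun i => vadd E' (vscal E' a (u i)) (v i)).
  move=> a u v [wu ->] [wv ->]; exists (fun j => vadd E' (vscal E' a (wu j)) (wv j)).
  by rewrite colYD colY_kscal.
have [x [xS yx]] := bipolar
  (fun y => pairn0r y) (fun x u y => pairnDr y x u) (fun c x y => pairnZr c y x)
  (fun x => pairn0l x) (fun x y u => pairnDl y u x) (fun c x y => pairnZl c y x)
  (ex_intro _ (fun _ => 0) (esym (matV0r TE' S))) Vl closed ny.
apply: yx; apply: ann; apply: pairn_eq0l => w.
by rewrite pairn_transpose; apply: xS; exists w.
Qed.

Hypothesis HK : Kothe p act eact.

Lemma kothe_mx m n (S : 'M[TA]_(m.+1, n.+1)) :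
  weak_closed (@pairn s E E' p n.+1) (row_image S) <->
  weak_closed (fun (y : 'I_m.+1 -> E') (x : 'I_m.+1 -> E) => pairn p x y) (col_image S).
Proof.
have rowE : (fun z => exists x, forall j, z j = rowmulE eact x (fun i j => S i j) j)
    = row_image S.
  apply: funext => z; apply: propext; rewrite /row_image.
  split=> [[x hx]|[x ->]]; exists x; rewrite ?rowmulE_mx ?mxA_id //.
  by apply: funext => j; rewrite hx rowmulE_mx mxA_id.
have colE : (fun z => exists y, forall i, z i = matmulE' act (fun i j => S i j) y i)
    = col_image S.
  apply: funext => z; apply: propext; rewrite /col_image.
  split=> [[y hy]|[y ->]]; exists y; rewrite ?matmulE'_mx ?mxA_id //.
  by apply: funext => i; rewrite hy matmulE'_mx mxA_id.
by rewrite -rowE -colE; apply: HK.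
Qed.

(* Elements of E (x)_A N are represented by formal sums
   sum_j n_j (x) x_j, i.e. finitely supported functions N -> E; such a sum is
   zero in the tensor product iff it is a difference of formal sums built from
   A-linear relations sum_j k_lj n_j = 0 among the n_j.  The quotient by these
   relations is the target of a universal balanced map. *)
Section TensorRelations.
Variable N : LMod s A.
Local Notation TNN := (TN N).

Definition FN := TNN -> TE.
Definition fn0 : FN := fun _ => 0.
Definition fnadd (f g : FN) : FN := fun u => f u + g u.
Definition fnopp (f : FN) : FN := fun u => - f u.
Lemma fnaddA : associative fnadd.
Proof. by move=> f g h; apply: funext => u; rewrite /fnadd addrA. Qed.
Lemma fnaddC : commutative fnadd.
Proof. by move=> f g; apply: funext => u; rewrite /fnadd addrC. Qed.
Lemma fnadd0 : left_id fn0 fnadd.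
Proof. by move=> f; apply: funext => u; rewrite /fnadd /fn0 add0r. Qed.
Lemma fnaddN : left_inverse fn0 fnopp fnadd.
Proof. by move=> f; apply: funext => u; rewrite /fnadd /fnopp /fn0 addNr. Qed.
HB.instance Definition _ := gen_eqMixin FN.
HB.instance Definition _ := gen_choiceMixin FN.
HB.instance Definition _ := GRing.isZmodule.Build FN fnaddA fnaddC fnadd0 fnaddN.

Lemma fn_addE (f g : FN) u : (f + g) u = f u + g u. Proof. by []. Qed.
Lemma fn_oppE (f : FN) u : (- f) u = - f u. Proof. by []. Qed.
Lemma fn_sumE I (r : seq I) (P : pred I) (F : I -> FN) u :
  (\sum_(i <- r | P i) F i) u = \sum_(i <- r | P i) F i u.
Proof. by apply: (big_morph (fun f : FN => f u)). Qed.

(* the elementary formal sum n (x) x *)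
Definition delta (n : TNN) (x : TE) : FN := fun u => if pselect (n = u) then x else 0.
Lemma deltaD n x y : delta n (x + y) = delta n x + delta n y.
Proof.
apply: (@funext TNN TE) => u; rewrite fn_addE /delta.
by case: (pselect (n = u)) => h /=; rewrite ?addr0.
Qed.
Lemma deltaN n x : delta n (- x) = - delta n x.
Proof.
apply: (@funext TNN TE) => u; rewrite fn_oppE /delta.
by case: (pselect (n = u)) => h /=; rewrite ?oppr0.
Qed.

Lemma delta0 n : delta n 0 = 0.
Proof. by apply: (@funext TNN TE) => u; rewrite /delta; case: (pselect (n = u)). Qed.

Definition dsum J (ws : 'I_J -> TNN) (Z : 'I_J -> TE) : FN := \sum_j delta (ws j) (Z j).

Lemma dsum_cat J1 J2 (ws1 : 'I_J1 -> TNN) (ws2 : 'I_J2 -> TNN) Z1 Z2 :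
  dsum (cat2 ws1 ws2) (cat2 Z1 Z2) = dsum ws1 Z1 + dsum ws2 Z2.
Proof. by rewrite /dsum big_split_ord; congr (_ + _); apply: eq_bigr => j _; rewrite ?cat2l ?cat2r. Qed.
Lemma dsumN J (ws : 'I_J -> TNN) Z : dsum ws (fun j => - Z j) = - dsum ws Z.
Proof. by rewrite /dsum -sumrN; apply: eq_bigr => j _; rewrite deltaN. Qed.

Definition rel_comb J (ws : 'I_J -> TNN) (Z : 'I_J -> TE) : Prop :=
  exists L (Y : 'I_L -> TE) (K : 'M[TA]_(L, J)), matV K ws = (fun _ => 0) /\ Z = rowX Y K.

Lemma rel_comb_nil (ws : 'I_0 -> TNN) (Z : 'I_0 -> TE) : rel_comb ws Z.
Proof. by exists 0%N, (fun _ => 0), 0; split; apply: funext => -[]. Qed.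

Lemma rel_combD J (ws : 'I_J -> TNN) (Z1 Z2 : 'I_J -> TE) :
  rel_comb ws Z1 -> rel_comb ws Z2 -> rel_comb ws (fun j => Z1 j + Z2 j).
Proof.
move=> [L1 [Y1 [K1 [K1ws ->]]]] [L2 [Y2 [K2 [K2ws ->]]]].
exists (L1 + L2)%N, (cat2 Y1 Y2), (col_mx K1 K2).
by rewrite matV_col_mx K1ws K2ws cat2_const /rowX rowV_col_mx.
Qed.

Lemma rel_combN J (ws : 'I_J -> TNN) (Z : 'I_J -> TE) :
  rel_comb ws Z -> rel_comb ws (fun j => - Z j).
Proof. by move=> [L [Y [K [Kws ->]]]]; exists L, (fun l => - Y l), K; rewrite rowXN. Qed.

Lemma rel_comb_catl J1 J2 (ws1 : 'I_J1 -> TNN) (ws2 : 'I_J2 -> TNN) Z1 :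
  rel_comb ws1 Z1 -> rel_comb (cat2 ws1 ws2) (cat2 Z1 (fun _ => 0)).
Proof.
move=> [L [Y [K [Kws ->]]]]; exists L, Y, (row_mx K 0); split.
  by rewrite matV_row_mx Kws matV0; apply: funext => l; rewrite addr0.
by rewrite /rowX rowV_row_mx (rowV0 eactDr).
Qed.

Lemma rel_comb_catr J1 J2 (ws1 : 'I_J1 -> TNN) (ws2 : 'I_J2 -> TNN) Z2 :
  rel_comb ws2 Z2 -> rel_comb (cat2 ws1 ws2) (cat2 (fun _ => 0) Z2).
Proof.
move=> [L [Y [K [Kws ->]]]]; exists L, Y, (row_mx 0 K); split.
  by rewrite matV_row_mx Kws matV0; apply: funext => l; rewrite addr0.
by rewrite /rowX rowV_row_mx (rowV0 eactDr).
Qed.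

Lemma rel_comb_single J (ws : 'I_J -> TNN) (k : 'I_J -> TA) (y : TE) :
  \sum_j k j *: ws j = 0 -> rel_comb ws (fun j => ea y (k j)).
Proof.
move=> kws; exists 1%N, (fun _ => y), (\matrix_(l, j) k j); split.
  by apply: funext => l; rewrite -[RHS]kws; apply: eq_bigr => j _; rewrite mxE.
by apply: funext => j; rewrite /rowX /rowV big_ord1 mxE.
Qed.

(* if n_0 occurs again as the entry j0 of ws', the relation n_0 - ws'_j0 = 0
   moves the coefficient z0 of n_0 to position j0 *)
Lemma rel_comb_merge J (w0 : TNN) (ws' : 'I_J -> TNN) (z0 : TE) (Z' : 'I_J -> TE) j0 :
  ws' j0 = w0 -> rel_comb ws' (fun j => Z' j + (if j == j0 then z0 else 0)) ->
  rel_comb (cat2 (fun _ : 'I_1 => w0) ws') (cat2 (fun _ : 'I_1 => z0) Z').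
Proof.
move=> wj0 relZ''.
pose k := cat2 (fun _ : 'I_1 => 1 : TA) (fun j => if j == j0 then -1 else 0).
have -> : cat2 (fun _ : 'I_1 => z0) Z' = fun j =>
    cat2 (fun _ : 'I_1 => 0) (fun j => Z' j + (if j == j0 then z0 else 0)) j + ea z0 (k j).
  apply: funext => j; case: (split_ordP j) => i ->; rewrite /k !(cat2l, cat2r) ?eact1 ?add0r //.
  by case: (i == j0); rewrite ?eactNr ?eact1 ?eact0r ?addr0 // addrK.
apply: rel_combD; first exact: rel_comb_catr.
apply: rel_comb_single; rewrite big_split_ord /= big_ord1 /k !cat2l scale1r.
under eq_bigr do rewrite !cat2r.
rewrite (bigD1 j0) //= eqxx scaleN1r wj0 big1 ?addr0 ?subrr // => j /negbTE ->.
exact: scale0r.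
Qed.

(* a formal sum that vanishes pointwise comes from relations: either its first
   element n_0 occurs again and [rel_comb_merge] applies, or it does not and
   its coefficient is 0 *)
Lemma dsum_eq0_rel_comb J (ws : 'I_J -> TNN) (Z : 'I_J -> TE) :
  dsum ws Z = 0 -> rel_comb ws Z.
Proof.
elim: J ws Z => [|J IH] ws Z; first by move=> _; apply: rel_comb_nil.
move: ws Z; change J.+1 with (1 + J)%N => ws Z.
rewrite (cat2_split ws) (cat2_split Z).
move: (fun i => ws (lshift J i)) (fun i => ws (rshift 1 i)).
move: (fun i => Z (lshift J i)) (fun i => Z (rshift 1 i)) => z1 Z' w1 ws'.
have -> : z1 = fun _ => z1 ord0 by apply: funext => i; rewrite ord1.
have -> : w1 = fun _ => w1 ord0 by apply: funext => i; rewrite ord1.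
move: (w1 ord0) (z1 ord0) => w0 z0 {w1 z1}.
rewrite dsum_cat /dsum big_ord1 => sum0.
case: (pselect (exists j0, ws' j0 = w0)) => [[j0 wj0]|no_rep].
  apply: (rel_comb_merge wj0); apply: IH; rewrite /dsum; under eq_bigr do rewrite deltaD.
  rewrite big_split /= [X in _ + X](bigD1 j0) //= eqxx wj0 [X in _ + (_ + X)]big1.
    by rewrite addr0 addrC.
  by move=> j /negbTE ->; rewrite delta0.
have z00 : z0 = 0.
  have := congr1 (fun f : FN => f w0) sum0 => /=; rewrite fn_addE fn_sumE big1 ?addr0.
    by rewrite /delta; case: (pselect (w0 = w0)).
  move=> j _; rewrite /delta; case: (pselect (ws' j = w0)) => // e.
  by case: no_rep; exists j.
rewrite z00; apply: rel_comb_catr; apply: IH.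
by rewrite -sum0 z00 delta0 add0r.
Qed.

(* the subgroup of formal sums that vanish in the tensor product *)
Definition Wset (f : FN) : Prop :=
  exists J (ws : 'I_J -> TNN) (Z : 'I_J -> TE), rel_comb ws Z /\ f = dsum ws Z.

Lemma Wset0 : Wset 0.
Proof.
exists 0%N, (fun _ => 0), (fun _ => 0); split; first exact: rel_comb_nil.
by rewrite /dsum big_ord0.
Qed.

Lemma WsetB f g : Wset f -> Wset g -> Wset (f - g).
Proof.
move=> [J1 [ws1 [Z1 [rel1 ->]]]] [J2 [ws2 [Z2 [rel2 ->]]]].
exists (J1 + J2)%N, (cat2 ws1 ws2), (cat2 Z1 (fun j => - Z2 j)); split.
  have -> : cat2 Z1 (fun j => - Z2 j) =
      fun j => cat2 Z1 (fun _ => 0) j + cat2 (fun _ => 0) (fun j => - Z2 j) j.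
    by apply: funext => j; case: (split_ordP j) => i ->; rewrite !(cat2l, cat2r) ?addr0 ?add0r.
  by apply: rel_combD; [apply: rel_comb_catl | apply: rel_comb_catr; apply: rel_combN].
by rewrite dsum_cat dsumN.
Qed.

Definition tensor_group : AbGroup := QuotGroup Wset0 WsetB.
Definition tensor_map (x : E) (n : N) : tensor_group := coset Wset (delta n x).

Lemma tensor_map_balanced : balanced (vadd E) eact tensor_map.
Proof.
split; last split.
- by move=> x y m; rewrite /tensor_map -[vadd E x y]/((x : TE) + y) deltaD (cosetD Wset0 WsetB).
- move=> x m n; rewrite /tensor_map /= -(cosetD Wset0 WsetB); apply/(cosetP Wset0 WsetB).
  pose ws := fun j : 'I_3 => nth (0 : TNN) [:: (m : TNN) + n; m; n] j.
  pose k := fun j : 'I_3 => nth (0 : TA) [:: 1; -1; -1] j.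
  exists 3%N, ws, (fun j => ea x (k j)); split.
    by apply: rel_comb_single; rewrite !big_ord_recl big_ord0 /ws /k /= scale1r !scaleN1r addr0 -opprD subrr.
  rewrite /dsum !big_ord_recl big_ord0 /ws /k /= eact1 !eactNr ?eact1 !deltaN addr0.
  by rewrite opprD addrA.
- move=> x a m; rewrite /tensor_map /=; apply/(cosetP Wset0 WsetB).
  pose ws := fun j : 'I_2 => nth (0 : TNN) [:: (m : TNN); (a : TA) *: (m : TNN)] j.
  pose k := fun j : 'I_2 => nth (0 : TA) [:: (a : TA); -1] j.
  exists 2%N, ws, (fun j => ea x (k j)); split.
    by apply: rel_comb_single; rewrite !big_ord_recl big_ord0 /ws /k /= scaleN1r addr0 subrr.
  by rewrite /dsum !big_ord_recl big_ord0 /ws /k /= eactNr eact1 deltaN addr0.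
Qed.

Lemma tensor_zero_Wset (t : seq (E * N)) : tensor_zero (vadd E) eact t ->
  Wset (\sum_(q <- t) delta q.2 q.1).
Proof.
move=> tz; have := tz _ _ tensor_map_balanced; rewrite /tensor_map.
rewrite (coset_sum Wset0 WsetB t (fun q : E * N => delta q.2 q.1)).
exact: coset_eq0.
Qed.

Lemma tensor_zero_equational q (xs : 'I_q -> TE) (ms : 'I_q -> TNN) :
  tensor_zero (vadd E) eact [seq (xs k : E, ms k) | k <- index_enum 'I_q] ->
  exists J (ws : 'I_J -> TNN), rel_comb (cat2 ms ws) (cat2 xs (fun _ => 0)).
Proof.
move=> /tensor_zero_Wset [J [ws [Z [relZ]]]]; rewrite big_map => eqZ.
exists J, ws.
have -> : cat2 xs (fun _ => 0) =
    fun j => cat2 xs (fun j => - Z j) j + cat2 (fun _ => 0) Z j.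
  by apply: funext => j; case: (split_ordP j) => i ->; rewrite !(cat2l, cat2r) ?addr0 ?addNr.
apply: rel_combD; last exact: rel_comb_catr.
by apply: dsum_eq0_rel_comb; rewrite dsum_cat dsumN -eqZ subrr.
Qed.
End TensorRelations.

Section BalancedMaps.
Variables (M : LMod s A) (G : AbGroup) (b : E -> M -> G).
Hypothesis bal : balanced (vadd E) eact b.

Lemma balanced0l (m : TN M) : (b (v0 E) m : TG G) = 0.
Proof.
have [bD _] := bal; apply: (@addIr (TG G) (b (v0 E) m)).
by rewrite add0r -[in RHS](@vadd0 s E (v0 E)) bD.
Qed.
Lemma balanced0r (x : TE) : (b x (m0 s A M) : TG G) = 0.
Proof.
have [_ [bD _]] := bal; apply: (@addIr (TG G) (b x (m0 s A M))).
by rewrite add0r -[in RHS](@madd0 s A M (m0 s A M)) bD.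
Qed.
Lemma balanced_suml I (r : seq I) (F : I -> TE) (m : TN M) :
  (b (\sum_(i <- r) F i) m : TG G) = \sum_(i <- r) (b (F i) m : TG G).
Proof.
have [bD _] := bal; apply: (big_morph (fun x => b x m)) => [u v|]; first exact: bD.
exact: balanced0l.
Qed.
Lemma balanced_sumr I (r : seq I) (F : I -> TN M) (x : TE) :
  (b x (\sum_(i <- r) F i) : TG G) = \sum_(i <- r) (b x (F i) : TG G).
Proof.
have [_ [bD _]] := bal; apply: (big_morph (b x)) => [u v|]; first exact: bD.
exact: balanced0r.
Qed.

Lemma balanced_transpose L q (z : 'I_L -> TE) (R : 'M[TA]_(L, q)) (ms : 'I_q -> TN M) :
  \sum_(k < q) (b (rowX z R k) (ms k) : TG G) = \sum_(l < L) (b (z l) (matV R ms l) : TG G).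
Proof.
have [_ [_ bZ]] := bal; rewrite /rowX /rowV; under eq_bigr do rewrite balanced_suml.
rewrite exchange_big /=; apply: eq_bigr => l _.
by rewrite balanced_sumr; apply: eq_bigr => k _; rewrite bZ.
Qed.
End BalancedMaps.

Lemma tensor_zero_of_relation (M : LMod s A) q L (z : 'I_L -> TE) (R : 'M[TA]_(L, q))
    (ms : 'I_q -> TN M) :
  matV R ms = (fun _ => 0) ->
  tensor_zero (vadd E) eact [seq (rowX z R k : E, ms k) | k <- index_enum 'I_q].
Proof.
move=> Rms G b bal; rewrite gsum_big big_map.
rewrite -[LHS]/(\sum_(k < q) (b (rowX z R k) (ms k) : TG G)) balanced_transpose // Rms.
by rewrite big1 // => l _; apply: balanced0r.
Qed.

Lemma tensor_families (M : LMod s A) (t : seq (E * M)) :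
  exists q (xs : 'I_q -> TE) (ms : 'I_q -> TN M),
    t = [seq (xs k : E, ms k) | k <- index_enum 'I_q].
Proof.
pose d : E * M := (v0 E, m0 s A M).
exists (size t), (fun k => (nth d t k).1), (fun k => (nth d t k).2).
rewrite -{1}(mkseq_nth d t) /mkseq -val_enum_ord -map_comp enumT.
by apply: eq_map => k /=; case: (nth d t k).
Qed.

Lemma lin0 (M N : LMod s A) (f : M -> N) : lmod_lin f -> (f (0 : TN M) : TN N) = 0.
Proof.
move=> [fD _]; have := fD (0 : TN M) (0 : TN M); rewrite [madd _ _ _ _ _]addr0 => f00.
by apply: (@addIr (TN N) (f (0 : TN M))); rewrite add0r; exact: (esym f00).
Qed.

Lemma lin_matV (M N : LMod s A) (f : M -> N) : lmod_lin f ->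
  forall m n (R : 'M[TA]_(m, n)) (ms : 'I_n -> TN M) l,
    (f (matV R ms l) : TN N) = matV R (fun k => f (ms k) : TN N) l.
Proof.
move=> flin m n R ms l; have [fD fZ] := flin.
by rewrite /matV (big_morph f fD (lin0 flin)); apply: eq_bigr => k _; apply: fZ.
Qed.

Definition dot n (r : 'rV[TA]_n) (y : 'I_n -> TE') : TE' := \sum_l r 0 l *: y l.
Lemma dot_mul m n (c : 'rV[TA]_m) (S : 'M[TA]_(m, n)) y : dot (c *m S) y = dot c (colY S y).
Proof.
rewrite /dot /colY /matV; under eq_bigr do rewrite mxE scaler_suml.
rewrite exchange_big /=; apply: eq_bigr => k _.
by rewrite scaler_sumr; apply: eq_bigr => l _; rewrite scalerA.
Qed.
Lemma dotD n (r r' : 'rV[TA]_n) y : dot (r + r') y = dot r y + dot r' y.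
Proof. by rewrite /dot -big_split; apply: eq_bigr => l _; rewrite mxE scalerDl. Qed.
Lemma dotN n (r : 'rV[TA]_n) y : dot (- r) y = - dot r y.
Proof. by rewrite /dot -sumrN; apply: eq_bigr => l _; rewrite mxE scaleNr. Qed.
Lemma dotZ n (a : TA) (r : 'rV[TA]_n) y : dot (a *: r) y = a *: dot r y.
Proof. by rewrite /dot scaler_sumr; apply: eq_bigr => l _; rewrite mxE scalerA. Qed.
Lemma dot_delta n (l : 'I_n) y : dot (delta_mx 0 l) y = y l.
Proof.
rewrite /dot (bigD1 l) //= mxE !eqxx scale1r big1 ?addr0 // => k /negbTE kl.
by rewrite mxE kl andbF scale0r.
Qed.
Lemma dot_y0 n (r : 'rV[TA]_n) : dot r (fun _ => 0) = 0.
Proof. by rewrite /dot big1 // => l _; rewrite scaler0. Qed.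

Section InjectiveToFlat.
Hypothesis noeth : acc_chain (@left_ideal s A).
Hypothesis inj : injective_lmod (vadd E') act.

(* Hom_A(-, E') is exact: if the rows of S generate the left kernel of P, a
   y in the kernel of S. defines the A-linear map r P |-> r.y on the image of
   .P; extending it to A^{1 x e} produces z with y = P z. *)
Lemma injective_exact n e m (P : 'M[TA]_(n, e)) (S : 'M[TA]_(m, n)) :
  (forall r : 'rV_n, r *m P = 0 -> exists c : 'rV_m, r = c *m S) ->
  forall y, colY S y = (fun _ => 0) -> col_image P y.
Proof.
move=> Sgen y Sy0.
have dot_wd : forall r r' : 'rV_n, r *m P = r' *m P -> dot r y = dot r' y.
  move=> r r' rr'; have [c rc] : exists c, r - r' = c *m S.
    by apply: Sgen; rewrite mulmxBl rr' subrr.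
  by apply/eqP; rewrite -subr_eq0 -dotN -dotD rc dot_mul Sy0 dot_y0.
pose f (u : ImgLMod P) : E' := dot (sval (cid (proj2_sig u))) y.
have fE : forall (u : ImgLMod P) r, sval u = r *m P -> f u = dot r y.
  by move=> u r ur; rewrite /f; case: cid => r' ur' /=; apply: dot_wd; rewrite -ur -ur'.
have flin : lin_into (vadd E') act f.
  split=> [u v|a u].
    case: (proj2_sig u) => r ur; case: (proj2_sig v) => r' vr'.
    rewrite (fE _ (r + r')); last by rewrite /= ur vr' mulmxDl.
    by rewrite (fE _ r ur) (fE _ r' vr') dotD.
  case: (proj2_sig u) => r ur; rewrite (fE _ ((a : TA) *: r)); last by rewrite /= ur scalemxAl.
  by rewrite (fE _ r ur) dotZ.
have [g [[gD gZ] gf]] :=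
  inj (img_incl_lin P) (@img_incl_inj s A e n P) flin.
have g0 : (g (0 : 'rV[TA]_e) : TE') = 0.
  have := gD (0 : 'rV[TA]_e) 0; rewrite [madd _ _ _ _ _]addr0 => g00.
  by apply: (@addIr TE' (g 0)); rewrite add0r; exact: (esym g00).
have g_sum : forall (F : 'I_e -> 'rV[TA]_e), (g (\sum_j F j) : TE') = \sum_j (g (F j) : TE').
  by move=> F; apply: (big_morph g) => // u v; apply: gD.
exists (fun j => g (delta_mx 0 j)); apply: funext => l.
have -> : y l = g (row l P).
  rewrite -[row l P]/(img_incl (img_row P l)) gf (fE _ (delta_mx 0 l)) ?dot_delta //.
  exact: rowE.
by rewrite [row l P]row_sum_delta g_sum; apply: eq_bigr => j _; rewrite gZ mxE.
Qed.
(* The equational criterion of flatness: a relation x P = 0 in E factors as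
   x = z S with S P = 0.  The rows of S generate the left kernel of P and
   those of T the left kernel of S; by injectivity Im(S.) = Ker(T.) is weakly
   closed, so Im(.S) is closed by (K) and equals the annihilator of
   Ker(S.) = Im(P.), which contains x since x P = 0. *)
Lemma injective_relations n e (P : 'M[TA]_(n, e)) (x : 'I_n -> TE) :
  rowX x P = (fun _ => 0) ->
  exists m (S : 'M[TA]_(m, n)) (z : 'I_m -> TE), S *m P = 0 /\ x = rowX z S.
Proof.
case: n P x => [|n] P x xP0.
  exists 0%N, 0, (fun _ => 0); split; first by rewrite [LHS]flatmx0.
  by apply: funext => -[].
have [m [S [SP Sgen]]] := kernel_fg noeth P.
have [m2 [T [TS Tgen]]] := kernel_fg noeth S.
have col_closed : weak_closed (fun (y : 'I_m.+1 -> E') (x : 'I_m.+1 -> E) => pairn p x y)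
    (col_image S).
  have -> : col_image S = (fun y => colY T y = fun _ => 0).
    apply: funext => y; apply: propext; split=> [[w ->]|]; last exact: injective_exact.
    by rewrite /colY -matV_mul TS matV0.
  exact: ker_colY_closed.
have [w ->] : row_image S x.
  apply: row_image_dual; first exact/kothe_mx.
  move=> y /(injective_exact Sgen) [z ->].
  by rewrite -pairn_transpose xP0 pairn0l.
by exists m.+1, S, w.
Qed.

(* Injectivity of E' implies flatness of E: a tensor sum_k xs_k (x) ms_k
   vanishing in E (x) N yields, by the equational criterion, relations
   (xs, 0) = Y (K1 | Kx) with K1 i(ms) + Kx ws = 0; factoring the relation
   Y Kx = 0 as Y = z S with S Kx = 0 gives xs = z (S K1) and
   i((S K1) ms) = - S Kx ws = 0, so (S K1) ms = 0 by injectivity of i. *)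
Lemma injective_flat : flat_rmod (vadd E) eact.
Proof.
move=> M N i ilin iinj t; have [q [xs [ms ->]]] := tensor_families t.
rewrite -map_comp => tzN.
have [J [ws [L [Y [R [Rws defxs]]]]]] := tensor_zero_equational tzN.
move: Rws defxs; rewrite -[R]hsubmxK matV_row_mx /rowX rowV_row_mx.
move: (lsubmx R) (rsubmx R) => K1 Kx K1Kx /cat2_inj [YK1 YKx].
have [m [S [z [SKx defY]]]] := injective_relations (esym YKx).
have -> : xs = rowX z (S *m K1) by rewrite -rowX_mul -defY.
apply: tensor_zero_of_relation; apply: funext => l; apply: iinj.
rewrite (lin_matV ilin) (matV_mul S K1).
have -> : matV K1 (fun k => i (ms k) : TN N) = fun l => - matV Kx ws l.
  apply: funext => l'; apply/eqP; rewrite -subr_eq0 opprK.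
  by have := congr1 (fun F => F l') K1Kx => /= ->.
by rewrite matVN -matV_mul SKx matV0 oppr0 (lin0 ilin).
Qed.
End InjectiveToFlat.

(* in E (x) A^{1 x c}, sum_k x_k (x) row_k P = sum_j (x P)_j (x) e_j *)
Lemma tensor_zero_rows b c (x : 'I_b -> TE) (P : 'M[TA]_(b, c)) :
  rowX x P = (fun _ => 0) ->
  tensor_zero (vadd E) eact [seq (x k : E, row k P : RowLMod A c) | k <- index_enum 'I_b].
Proof.
move=> xP0 G bb bal; rewrite gsum_big big_map.
rewrite -[LHS]/(\sum_(k < b) (bb (x k) (row k P) : TG G)).
have rowP : forall k, (row k P : TN (RowLMod A c)) =
    matV P (fun j => delta_mx 0 j : TN (RowLMod A c)) k.
  by move=> k; rewrite [LHS]row_sum_delta; apply: eq_bigr => j _; rewrite mxE.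
under eq_bigr do rewrite rowP.
rewrite -(balanced_transpose bal x P) xP0 big1 // => j _; exact: (balanced0l bal).
Qed.

Definition in_row_image a b (Q : 'M[TA]_(a, b)) (w : 'rV[TE]_b) : Prop :=
  row_image Q (fun k => w 0 k).
Lemma in_row_image0 a b (Q : 'M[TA]_(a, b)) : in_row_image Q 0.
Proof. by exists (fun _ => 0); rewrite rowX0l; apply: funext => k; rewrite mxE. Qed.
Lemma in_row_imageB a b (Q : 'M[TA]_(a, b)) u w :
  in_row_image Q u -> in_row_image Q w -> in_row_image Q (u - w).
Proof.
move=> [z1 u_z1] [z2 w_z2]; exists (fun l => z1 l - z2 l).
rewrite rowXD rowXN; apply: funext => k.
by rewrite !mxE (congr1 (fun F => F k) u_z1) (congr1 (fun F => F k) w_z2).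
Qed.

(* If the rows of Q generate the left kernel of P, then
   E (x) Im(.P) --> E^{1 x b} / Im(.Q),  x (x) r P |-> class of x r
   is a well-defined balanced map. *)
Lemma image_balanced a b c (Q : 'M[TA]_(a, b)) (P : 'M[TA]_(b, c)) :
  (forall r : 'rV_b, r *m P = 0 -> exists x : 'rV_a, r = x *m Q) ->
  exists (G : AbGroup) (bb : E -> ImgLMod P -> G), balanced (vadd E) eact bb /\
    forall x : 'I_b -> TE,
      gsum [seq bb (x k) (img_row P k) | k <- index_enum 'I_b] = g0 G -> row_image Q x.
Proof.
move=> Qgen; pose V := in_row_image Q.
have V0 : V 0 := in_row_image0 Q.
have VB : forall u w, V u -> V w -> V (u - w) := @in_row_imageB _ _ Q.
pose rep (v : ImgLMod P) : 'rV[TA]_b := sval (cid (proj2_sig v)).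
have repE : forall v : ImgLMod P, sval v = rep v *m P by move=> v; rewrite /rep; case: cid.
pose bb (x : E) (v : ImgLMod P) : QuotGroup V0 VB := coset V (\row_k ea x (rep v 0 k)).
have bbE : forall x v (r : 'rV_b), sval v = r *m P -> bb x v = coset V (\row_k ea x (r 0 k)).
  move=> x v r vr; apply/(cosetP V0 VB).
  have [c' defc] : exists c', rep v - r = c' *m Q.
    by apply: Qgen; rewrite mulmxBl -repE -vr subrr.
  exists (fun l => ea x (c' 0 l)); apply: funext => k.
  rewrite !mxE -eactNr -eactDr.
  have -> : rep v 0 k - r 0 k = (rep v - r) 0 k by rewrite !mxE.
  rewrite defc mxE (ract_sumr eactDr); apply: eq_bigr => l _.
  by rewrite eactM.
exists (QuotGroup V0 VB), bb; split.
  split; last split.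
  - move=> x1 x2 v; rewrite /bb /= -(cosetD V0 VB); congr coset.
    by apply/rowP => k; rewrite !mxE eactDl.
  - move=> x u v; rewrite (bbE x _ (rep u + rep v)); last by rewrite /= !repE mulmxDl.
    rewrite /bb /= -(cosetD V0 VB); congr coset.
    by apply/rowP => k; rewrite !mxE eactDr.
  - move=> x a' v; rewrite (bbE x _ ((a' : TA) *: rep v)); last by rewrite /= repE scalemxAl.
    by rewrite /bb; congr coset; apply/rowP => k; rewrite !mxE eactM.
move=> x.
have -> : [seq bb (x k) (img_row P k) | k <- index_enum 'I_b] =
    [seq coset V (\row_l ea (x k) ((delta_mx 0 k : 'rV[TA]_b) 0 l)) | k <- index_enum 'I_b].
  by apply: eq_map => k /=; rewrite (bbE _ _ (delta_mx 0 k)) //= -rowE.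
rewrite (coset_sum V0 VB) => /(@coset_eq0 _ V V0 VB _) [z xz].
exists z; apply: funext => l; rewrite -(congr1 (fun F => F l) xz) summxE (bigD1 l) //= !mxE !eqxx eact1.
by rewrite big1 ?addr0 // => k /negbTE kl; rewrite !mxE eq_sym kl eact0r.
Qed.

Section FlatToInjective.
Hypothesis flat : flat_rmod (vadd E) eact.

Lemma flat_exact a b c (Q : 'M[TA]_(a, b)) (P : 'M[TA]_(b, c)) :
  (forall r : 'rV_b, r *m P = 0 -> exists x : 'rV_a, r = x *m Q) ->
  forall x : 'I_b -> TE, rowX x P = (fun _ => 0) -> row_image Q x.
Proof.
move=> Qgen x xP0; have [G [bb [bal recover]]] := image_balanced Qgen.
have tz : tensor_zero (vadd E) eact [seq (x k : E, img_row P k) | k <- index_enum 'I_b].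
  apply: flat (img_incl_lin P) (@img_incl_inj s A c b P) _ _.
  by rewrite -map_comp; exact: tensor_zero_rows.
by apply: recover; have := tz G bb bal; rewrite -map_comp.
Qed.

(* Flatness of E gives 1-injectivity of E': Im(.P1) = Ker(.P2) is weakly
   closed, hence so is Im(P1.) by (K); it is then the annihilator of
   Ker(.P1) = Im(.P0), which annihilates every y with P0 y = 0. *)
Lemma flat_exact_dual k0 k1 k2 k3
    (P0 : 'M[TA]_(k0, k1)) (P1 : 'M[TA]_(k1, k2)) (P2 : 'M[TA]_(k2, k3)) :
  (forall r : 'rV_k1, r *m P1 = 0 <-> exists x : 'rV_k0, r = x *m P0) ->
  (forall r : 'rV_k2, r *m P2 = 0 <-> exists x : 'rV_k1, r = x *m P1) ->
  forall y, colY P0 y = (fun _ => 0) -> col_image P1 y.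
Proof.
move=> ex1 ex2 y P0y.
have ann : forall x, rowX x P1 = (fun _ => 0) -> (pairn p x y : TK s) = 0.
  move=> x /(flat_exact (fun r => proj1 (ex1 r))) [w ->].
  by rewrite pairn_transpose P0y pairn0r.
case: k1 P0 P1 ex1 ex2 y P0y ann => [|k1] P0 P1 ex1 ex2 y P0y ann.
  by exists (fun _ => 0); apply: funext => -[].
case: k2 P1 P2 ex1 ex2 ann => [|k2] P1 P2 ex1 ex2 ann.
  exists (fun _ => 0); have -> : y = fun _ => 0.
    by apply: pairn_eq0r => x; apply: ann; apply: funext => -[].
  by apply: funext => i; rewrite /colY /matV big_ord0.
apply: col_image_dual => //; apply/kothe_mx.
have P1P2 : P1 *m P2 = 0.
  apply/row_matrixP => i; rewrite row_mul row0; apply/(ex2 _).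
  by exists (delta_mx 0 i); rewrite -rowE.
have -> : row_image P1 = (fun z => rowX z P2 = fun _ => 0).
  apply: funext => z; apply: propext; split=> [[x ->]|].
    by rewrite rowX_mul P1P2 rowX0r.
  by move=> zP2; apply: (flat_exact (fun r => proj1 (ex2 r))) zP2.
exact: ker_rowX_closed.
Qed.

Lemma exactA_mx a b c (P : 'I_a -> 'I_b -> A) (Q : 'I_b -> 'I_c -> A) :
  exactA P Q -> forall r : 'rV[TA]_b, r *m mxA Q = 0 <-> exists x : 'rV_a, r = x *m mxA P.
Proof.
move=> PQ r.
have rowmulA_mx : forall m n (y : 'I_m -> A) (R : 'I_m -> 'I_n -> A) j,
    rowmulA y R j = ((\row_i (y i : TA)) *m mxA R) 0 j.
  by move=> m n y R j; rewrite !mxE; apply: eq_bigr => i _; rewrite !mxE.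
have row_id : forall n (u : 'rV[TA]_n), \row_i (u 0 i) = u.
  by move=> n u; apply/rowP => i; rewrite mxE.
have [PQ1 PQ2] := PQ (fun j => r 0 j); split=> [rQ0|[x rx]].
  have [x rx] : exists x, forall j, r 0 j = rowmulA x P j.
    by apply: PQ1 => j; rewrite rowmulA_mx row_id rQ0 mxE.
  by exists (\row_i (x i : TA)); apply/rowP => j; rewrite rx rowmulA_mx.
have rP0 : forall j, rowmulA (fun j => r 0 j) Q j = a0 A.
  by apply: PQ2; exists (fun i => x 0 i) => j; rewrite rx rowmulA_mx row_id.
by apply/rowP => j; have := rP0 j; rewrite rowmulA_mx row_id => ->; rewrite mxE.
Qed.

Lemma flat_n_injective : n_injective act 1.
Proof.
move=> ks Ps exact_seq.
have ex1 := exactA_mx (exact_seq 0%N isT).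
have ex2 := exactA_mx (exact_seq 1%N isT).
have P0P1 : mxA (Ps 0%N) *m mxA (Ps 1%N) = 0.
  apply/row_matrixP => k; rewrite row_mul row0; apply/(ex1 _).
  by exists (delta_mx 0 k); rewrite -rowE.
move=> y; split=> [P0y|[z yz] i].
  have P0y' : colY (mxA (Ps 0%N)) y = fun _ => 0.
    by apply: funext => i; rewrite -matmulE'_mx P0y.
  have [z yz] := flat_exact_dual ex1 ex2 P0y'.
  by exists z => j; rewrite yz matmulE'_mx.
have -> : y = colY (mxA (Ps 1%N)) z by apply: funext => j; rewrite yz matmulE'_mx.
by rewrite matmulE'_mx /colY -matV_mul P0P1 matV0.
Qed.
End FlatToInjective.
End DualPair.

Theorem theorem1 (s : scalars) (A : Alg s) (HA : noetherian_domain A)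
  (E E' : VS s) (p : E -> E' -> K s)
  (Hbil : bilinear p) (Hnd : nondegenerate p)
  (act : A -> E' -> E') (Hact : lmod_action act)
  (Hsemi : forall a : A, weak_continuous (fun (y : E') (x : E) => p x y) (act a))
  (eact : E -> A -> E)
  (Hadj : forall (x : E) (a : A) (y : E'), p (eact x a) y = p x (act a y))
  (HK : Kothe p act eact) :
  (injective_lmod (vadd E') act -> flat_rmod (vadd E) eact) /\
  (flat_rmod (vadd E) eact -> n_injective act 1).
Proof.
have [_ [left_noeth _]] := HA.
split=> [inj | flat].
  exact: (injective_flat Hbil Hnd Hact Hadj HK left_noeth inj).
exact: (flat_n_injective Hbil Hnd Hact Hadj HK flat).
Qed.
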